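(* Let $|p|<1$, $|P|<1$, let $n\ge0$ be an integer, and let $a,b,c,q,r$ and $A,B,C,Q,R$ be nonzero complex numbers such that all expressions below are well defined. Then \begin{align*} &\sum_{k=0}^n\frac{\theta(ar^kq^k,\,br^kq^{-k};p)}{\theta(a,b;p)}\,\frac{(a,b;r,p)_k\,(c,a/(bc);q,p)_k}{(q,aq/b;q,p)_k\,(ar/c,bcr;r,p)_k}\\ &\qquad\times\frac{(CR^{-n}/A,\,R^{-n}/(BC);R,P)_k\,(Q^{-n},\,BQ^{-n}/A;Q,P)_k}{(Q^{-n}/C,\,BCQ^{-n}/A;Q,P)_k\,(R^{-n}/A,\,R^{-n}/B;R,P)_k}\,q^k\\ &=\frac{(ar,br;r,p)_n\,(cq,aq/(bc);q,p)_n\,(Q,AQ/B;Q,P)_n\,(AR/C,BCR;R,P)_n}{(q,aq/b;q,p)_n\,(ar/c,bcr;r,p)_n\,(AR,BR;R,P)_n\,(CQ,AQ/(BC);Q,P)_n}\\ &\quad\times\sum_{k=0}^n\frac{\theta(AR^kQ^k,\,BR^kQ^{-k};P)}{\theta(A,B;P)}\,\frac{(A,B;R,P)_k\,(C,A/(BC);Q,P)_k}{(Q,AQ/B;Q,P)_k\,(AR/C,BCR;R,P)_k}\\ &\qquad\times\frac{(cr^{-n}/a,\,r^{-n}/(bc);r,p)_k\,(q^{-n},\,bq^{-n}/a;q,p)_k}{(q^{-n}/c,\,bcq^{-n}/a;q,p)_k\,(r^{-n}/a,\,r^{-n}/b;r,p)_k}\,Q^k. \end{align*}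
   Context: For $|p|<1$ and $x\neq 0$, $\theta(x;p)=(x;p)_\infty(p/x;p)_\infty$ where $(x;p)_\infty=\prod_{k\ge 0}(1-xp^k)$, and $\theta(x_1,\dots,x_m;p)=\prod_{i=1}^m\theta(x_i;p)$. For $a\ne0$ and integer $k\ge0$, $(a;q,p)_k=\prod_{j=0}^{k-1}\theta(aq^j;p)$ (empty product $=1$), and $(a_1,\dots,a_m;q,p)_k=\prod_i(a_i;q,p)_k$. *)

From Stdlib Require Import Reals.
From Coquelicot Require Import Coquelicot.
Open Scope C_scope.

Fixpoint cpow (x : C) (n : nat) : C :=
  match n with O => 1 | S m => cpow x m * x end.

Fixpoint csum (f : nat -> C) (n : nat) : C :=
  match n with O => f O | S m => csum f m + f (S m) end.

Fixpoint ppart (x p : C) (N : nat) : C :=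
  match N with O => 1 | S M => ppart x p M * (1 - x * cpow p M) end.

(* (x;p)_\infty = lim_{N -> oo} \prod_{k<N} (1 - x p^k), the limit being
   taken componentwise (real and imaginary parts); it exists for |p| < 1. *)
Definition qinf (x p : C) : C :=
  (real (Lim_seq (fun N => Re (ppart x p N))),
   real (Lim_seq (fun N => Im (ppart x p N)))).

Definition theta (x p : C) : C := qinf x p * qinf (p / x) p.

(* (a;q,p)_k = \prod_{j=0}^{k-1} theta(a q^j; p) *)
Fixpoint ell (a q p : C) (k : nat) : C :=
  match k with O => 1 | S j => ell a q p j * theta (a * cpow q j) p end.

From Stdlib Require Import Reals Lra Lia ZArith.
From Coquelicot Require Import Coquelicot.
Open Scope C_scope.

(* The summand on the left is t_k V_k, with t_k the k-th term of the bibasic elliptic summation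
   (Gasper's formula in Warnaar's elliptic form) in the parameters (a,b,c;q,r;p), and with
   V_k = S(n-k)/S(n) for the partial sums S of the same summation in (A,B,C;Q,R;P): the reversal
   (y;q,p)_n = (y;q,p)_(n-k) (q^(1-n)/y;q,p)_k * (elementary factor) turns V_k into a quotient of
   closed forms. Both sides are therefore (1/S(n)) sum_(k+i<=n) t_k T_i, summed in the two
   orders. The summation telescopes, each step being an instance of the addition formula for
   theta. That formula comes from the Jacobi triple product
   (p;p)_oo theta(x;p) = sum_j (-1)^j p^(j(j-1)/2) x^j (the limit of Rothe's q-binomial theorem),
   by splitting the product of two such series into its even and odd parts. *)

Lemma cpow_Cpow x n : cpow x n = x ^ n.
Proof. induction n as [|n IH]; simpl; [reflexivity|rewrite IH; ring]. Qed.

Lemma cpow_nz (x : C) n : x <> 0 -> cpow x n <> 0.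
Proof. intros; rewrite cpow_Cpow; apply Cpow_nz; auto. Qed.

Lemma cpow_add (x : C) a b : cpow x (a + b) = cpow x a * cpow x b.
Proof. rewrite !cpow_Cpow; apply Cpow_add_r. Qed.

Lemma Cinv_nz (x : C) : x <> 0 -> / x <> 0.
Proof.
  intros Hx E. apply C1_nz. rewrite <- (Cinv_r x Hx), E. ring.
Qed.

Lemma Cmult_eq_reg_l (c x y : C) : c <> 0 -> c * x = c * y -> x = y.
Proof. intros Hc E. replace x with (/ c * (c * x)) by (field; auto). rewrite E. field; auto. Qed.

Lemma Cmult_nz_l (x y : C) : x * y <> 0 -> x <> 0.
Proof. intros H E. apply H. rewrite E. ring. Qed.

Lemma Cmult_nz_r (x y : C) : x * y <> 0 -> y <> 0.
Proof. intros H E. apply H. rewrite E. ring. Qed.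

Lemma Re_minus (a b : C) : Re (a - b) = (Re a - Re b)%R.
Proof. destruct a, b; simpl; ring. Qed.

Lemma Im_minus (a b : C) : Im (a - b) = (Im a - Im b)%R.
Proof. destruct a, b; simpl; ring. Qed.

Lemma Im_le_Cmod (c : C) : (Rabs (Im c) <= Cmod c)%R.
Proof.
  destruct c as [x y]. unfold Cmod; simpl.
  rewrite <- sqrt_Rsqr_abs. apply sqrt_le_1_alt. unfold Rsqr. nra.
Qed.

Lemma Cmod_le_Re_Im (z : C) : (Cmod z <= Rabs (Re z) + Rabs (Im z))%R.
Proof.
  destruct z as [x y]. unfold Cmod; simpl.
  pose proof (Rabs_pos x); pose proof (Rabs_pos y).
  rewrite <- (sqrt_Rsqr (Rabs x + Rabs y)) by lra.
  apply sqrt_le_1_alt. pose proof (pow2_abs x); pose proof (pow2_abs y).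
  unfold Rsqr. simpl in *. nra.
Qed.

Lemma Cmod_1_minus_le z : (Cmod (1 - z) <= 1 + Cmod z)%R.
Proof. eapply Rle_trans; [apply Cmod_triangle|]. rewrite Cmod_opp, Cmod_1. lra. Qed.

Lemma Cmod_1_minus_ge z : (1 - Cmod z <= Cmod (1 - z))%R.
Proof.
  pose proof (Cmod_triangle (1 - z) z) as H.
  replace (1 - z + z) with (RtoC 1) in H by ring. rewrite Cmod_1 in H. lra.
Qed.

Lemma pow_le_1 (r : R) n : (0 <= r <= 1)%R -> (r ^ n <= 1)%R.
Proof. intros H; induction n; simpl; [lra|]. pose proof (pow_le r n ltac:(lra)). nra. Qed.

Lemma pow_le_antimono (r : R) m n : (0 <= r <= 1)%R -> (m <= n)%nat -> (r ^ n <= r ^ m)%R.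
Proof.
  intros Hr Hmn. replace n with (m + (n - m))%nat by lia. rewrite pow_add.
  pose proof (pow_le r m ltac:(lra)). pose proof (pow_le_1 r (n - m) Hr). nra.
Qed.

Lemma pow_eventually_lt (r eps : R) : (0 <= r < 1)%R -> (0 < eps)%R ->
  exists N, forall n, (N <= n)%nat -> (r ^ n < eps)%R.
Proof.
  intros Hr He. destruct (pow_lt_1_zero r ltac:(rewrite Rabs_pos_eq; lra) eps He) as [N HN].
  exists N. intros n Hn. specialize (HN n Hn). rewrite Rabs_pos_eq in HN; auto. apply pow_le; lra.
Qed.

Lemma exp_le_mono a b : (a <= b)%R -> (exp a <= exp b)%R.
Proof. intros [H|H]; [apply Rlt_le, exp_increasing; auto|subst; lra]. Qed.

(** * Limits of complex sequences *)

Definition cv (u : nat -> C) (l : C) : Prop :=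
  forall eps : R, (0 < eps)%R ->
  exists N, forall n, (N <= n)%nat -> (Cmod (u n - l) < eps)%R.

Lemma cv_Re u l : cv u l -> Un_cv (fun n => Re (u n)) (Re l).
Proof.
  intros H eps Heps. destruct (H eps Heps) as [N HN]. exists N. intros n Hn.
  unfold R_dist. rewrite <- Re_minus. eapply Rle_lt_trans; [apply re_le_Cmod|]. apply HN; lia.
Qed.

Lemma cv_Im u l : cv u l -> Un_cv (fun n => Im (u n)) (Im l).
Proof.
  intros H eps Heps. destruct (H eps Heps) as [N HN]. exists N. intros n Hn.
  unfold R_dist. rewrite <- Im_minus. eapply Rle_lt_trans; [apply Im_le_Cmod|]. apply HN; lia.
Qed.

Lemma cv_Re_Im u l :
  Un_cv (fun n => Re (u n)) (Re l) -> Un_cv (fun n => Im (u n)) (Im l) -> cv u l.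
Proof.
  intros H1 H2 eps Heps.
  destruct (H1 (eps / 2)%R ltac:(lra)) as [N1 HN1].
  destruct (H2 (eps / 2)%R ltac:(lra)) as [N2 HN2].
  exists (max N1 N2). intros n Hn.
  eapply Rle_lt_trans; [apply Cmod_le_Re_Im|]. rewrite Re_minus, Im_minus.
  specialize (HN1 n ltac:(lia)); specialize (HN2 n ltac:(lia)). unfold R_dist in *. lra.
Qed.

Lemma cv_lim u l : cv u l ->
  (real (Lim_seq (fun N => Re (u N))), real (Lim_seq (fun N => Im (u N)))) = l.
Proof.
  intros H.
  rewrite (is_lim_seq_unique _ (Re l)) by (apply is_lim_seq_Reals, cv_Re; auto).
  rewrite (is_lim_seq_unique _ (Im l)) by (apply is_lim_seq_Reals, cv_Im; auto).
  destruct l; reflexivity.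
Qed.

Lemma cv_const c : cv (fun _ => c) c.
Proof. intros e He. exists O. intros. replace (c - c) with (RtoC 0) by ring. rewrite Cmod_0. lra. Qed.

Lemma cv_ext u v l : (forall n, u n = v n) -> cv u l -> cv v l.
Proof. intros E H e He. destruct (H e He) as [N HN]. exists N. intros. rewrite <- E. auto. Qed.

Lemma cv_comp u l (phi : nat -> nat) :
  (forall N, exists M, forall n, (M <= n)%nat -> (N <= phi n)%nat) ->
  cv u l -> cv (fun n => u (phi n)) l.
Proof.
  intros Hphi H e He. destruct (H e He) as [N HN]. destruct (Hphi N) as [M HM].
  exists M. intros n Hn. apply HN, HM, Hn.
Qed.

Lemma cv_shift u l k : cv u l -> cv (fun n => u (n + k)%nat) l.
Proof. apply cv_comp. intros N; exists N; intros; lia. Qed.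

Lemma cv_unique u l m : cv u l -> cv u m -> l = m.
Proof.
  intros H1 H2. destruct (Ceq_dec l m) as [|Hne]; auto. exfalso.
  assert (Hp : (0 < Cmod (l - m))%R).
  { apply Cmod_gt_0. intro E. apply Hne. replace l with ((l - m) + m) by ring. rewrite E. ring. }
  destruct (H1 (Cmod (l - m) / 2)%R ltac:(lra)) as [N1 HN1].
  destruct (H2 (Cmod (l - m) / 2)%R ltac:(lra)) as [N2 HN2].
  set (u0 := u (max N1 N2)).
  specialize (HN1 (max N1 N2) ltac:(lia)). specialize (HN2 (max N1 N2) ltac:(lia)).
  pose proof (Cmod_triangle (u0 - m) (- (u0 - l))) as T. rewrite Cmod_opp in T.
  replace (u0 - m + - (u0 - l)) with (l - m) in T by ring. fold u0 in HN1, HN2. lra.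
Qed.

Lemma cv_bound v L B : cv v L -> (forall k, (Cmod (v k) <= B)%R) -> (Cmod L <= B)%R.
Proof.
  intros H Hb. destruct (Rle_or_lt (Cmod L) B) as [|Hlt]; auto.
  destruct (H (Cmod L - B)%R ltac:(lra)) as [N HN]. specialize (HN N (le_n _)). specialize (Hb N).
  pose proof (Cmod_triangle (v N) (- (v N - L))) as T. rewrite Cmod_opp in T.
  replace (v N + - (v N - L)) with L in T by ring. lra.
Qed.

Lemma cv_plus u v l m : cv u l -> cv v m -> cv (fun n => u n + v n) (l + m).
Proof.
  intros H1 H2. apply cv_Re_Im.
  - apply (CV_plus _ _ _ _ (cv_Re _ _ H1) (cv_Re _ _ H2)).
  - apply (CV_plus _ _ _ _ (cv_Im _ _ H1) (cv_Im _ _ H2)).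
Qed.

Lemma cv_mult u v l m : cv u l -> cv v m -> cv (fun n => u n * v n) (l * m).
Proof.
  intros H1 H2.
  pose proof (cv_Re _ _ H1) as A1. pose proof (cv_Im _ _ H1) as B1.
  pose proof (cv_Re _ _ H2) as A2. pose proof (cv_Im _ _ H2) as B2.
  apply cv_Re_Im.
  - apply (CV_minus _ _ _ _ (CV_mult _ _ _ _ A1 A2) (CV_mult _ _ _ _ B1 B2)).
  - apply (CV_plus _ _ _ _ (CV_mult _ _ _ _ A1 B2) (CV_mult _ _ _ _ B1 A2)).
Qed.

Lemma cv_scal c u l : cv u l -> cv (fun n => c * u n) (c * l).
Proof. intros; apply cv_mult; auto; apply cv_const. Qed.

Lemma cv_minus u v l m : cv u l -> cv v m -> cv (fun n => u n - v n) (l - m).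
Proof.
  intros H1 H2. apply (cv_ext (fun n => u n + (-1) * v n)); [intros; ring|].
  replace (l - m) with (l + (-1) * m) by ring. apply cv_plus, cv_scal; auto.
Qed.

Lemma cv_geometric_0 u (K r : R) : (0 <= r < 1)%R ->
  (forall n, (Cmod (u n) <= K * r ^ n)%R) -> cv u 0.
Proof.
  intros Hr H eps He. pose proof (Rabs_pos K).
  destruct (pow_eventually_lt r (eps / (Rabs K + 1)) Hr) as [N HN].
  { apply Rdiv_lt_0_compat; lra. }
  exists N. intros n Hn. specialize (HN n Hn).
  replace (u n - 0) with (u n) by ring. eapply Rle_lt_trans; [apply H|].
  pose proof (pow_le r n ltac:(lra)). pose proof (Rle_abs K).
  apply (Rmult_lt_compat_l (Rabs K + 1)) in HN; [|lra].
  replace ((Rabs K + 1) * (eps / (Rabs K + 1)))%R with eps in HN by (field; lra). nra.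
Qed.

Lemma cv_inv u l (c0 : R) : cv u l -> (0 < c0)%R -> (forall n, (c0 <= Cmod (u n))%R) -> l <> 0 ->
  cv (fun n => / u n) (/ l).
Proof.
  intros H Hc Hu Hl eps He.
  pose proof (proj1 (Cmod_gt_0 l) Hl) as Hml.
  destruct (H (eps * c0 * Cmod l)%R ltac:(apply Rmult_lt_0_compat; [nra|auto])) as [N HN].
  exists N. intros n Hn. specialize (HN n Hn). specialize (Hu n).
  assert (Hun : u n <> 0). { intro E. rewrite E, Cmod_0 in Hu. lra. }
  replace (/ u n - / l) with (- (u n - l) / (u n * l)) by (field; auto).
  rewrite Cmod_div, Cmod_mult, Cmod_opp by (apply Cmult_neq_0; auto).
  apply (Rmult_lt_reg_r (Cmod (u n) * Cmod l)); [nra|].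
  unfold Rdiv. rewrite Rmult_assoc, Rinv_l, Rmult_1_r by nra.
  assert (eps * c0 * Cmod l <= eps * (Cmod (u n) * Cmod l))%R.
  { rewrite Rmult_assoc. apply Rmult_le_compat_l; [lra|]. apply Rmult_le_compat_r; lra. }
  lra.
Qed.

Lemma cv_of_cauchy u :
  (forall eps, (0 < eps)%R -> exists N, forall n m, (N <= n)%nat -> (N <= m)%nat ->
     (Cmod (u n - u m) < eps)%R) ->
  exists l, cv u l.
Proof.
  intros H.
  assert (C1 : Cauchy_crit (fun n => Re (u n))).
  { intros e He. destruct (H e He) as [N HN]. exists N. intros n m Hn Hm. unfold R_dist.
    rewrite <- Re_minus. eapply Rle_lt_trans; [apply re_le_Cmod|]. apply HN; lia. }
  assert (C2 : Cauchy_crit (fun n => Im (u n))).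
  { intros e He. destruct (H e He) as [N HN]. exists N. intros n m Hn Hm. unfold R_dist.
    rewrite <- Im_minus. eapply Rle_lt_trans; [apply Im_le_Cmod|]. apply HN; lia. }
  destruct (Rcomplete.R_complete _ C1) as [lr Hr], (Rcomplete.R_complete _ C2) as [li Hi].
  exists (lr, li). apply cv_Re_Im; auto.
Qed.
Lemma geometric_increments_sum u (K r : R) : (0 <= r < 1)%R ->
  (forall n, (Cmod (u (S n) - u n) <= K * r ^ n)%R) ->
  forall n k, (Cmod (u (n + k)%nat - u n) <= K * r ^ n / (1 - r))%R.
Proof.
  intros Hr H n k.
  assert (HK : (0 <= K)%R).
  { specialize (H O). simpl in H. pose proof (Cmod_ge_0 (u 1%nat - u O)). lra. }
  enough (Cmod (u (n + k)%nat - u n) <= K * r ^ n * (1 - r ^ k) / (1 - r))%R.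
  { eapply Rle_trans; [eassumption|]. unfold Rdiv. apply Rmult_le_compat_r.
    - apply Rlt_le, Rinv_0_lt_compat; lra.
    - pose proof (Rmult_le_pos _ _ HK (pow_le r n ltac:(lra))).
      pose proof (pow_le r k ltac:(lra)). nra. }
  induction k as [|k IH].
  - rewrite Nat.add_0_r. replace (u n - u n) with (RtoC 0) by ring. rewrite Cmod_0.
    right. simpl. field. lra.
  - replace (u (n + S k)%nat - u n) with ((u (S (n + k)) - u (n + k)%nat) + (u (n + k)%nat - u n))
      by (rewrite Nat.add_succ_r; ring).
    eapply Rle_trans; [apply Cmod_triangle|].
    specialize (H (n + k)%nat). rewrite pow_add in H.
    replace (K * r ^ n * (1 - r ^ S k) / (1 - r))%R with
      (K * (r ^ n * r ^ k) + K * r ^ n * (1 - r ^ k) / (1 - r))%R by (simpl; field; lra).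
    lra.
Qed.

Lemma cv_of_geometric_increments u (K r : R) : (0 <= r < 1)%R ->
  (forall n, (Cmod (u (S n) - u n) <= K * r ^ n)%R) ->
  exists l, cv u l /\ forall n, (Cmod (l - u n) <= K * r ^ n / (1 - r))%R.
Proof.
  intros Hr H. pose proof (geometric_increments_sum u K r Hr H) as G.
  assert (HK : (0 <= K)%R).
  { specialize (H O). simpl in H. pose proof (Cmod_ge_0 (u 1%nat - u O)). lra. }
  destruct (cv_of_cauchy u) as [l Hl].
  - intros eps He.
    destruct (pow_eventually_lt r (eps / 2 * (1 - r) / (K + 1)) Hr) as [N HN].
    { apply Rdiv_lt_0_compat; [apply Rmult_lt_0_compat|]; lra. }
    assert (Hsmall : forall n, (N <= n)%nat -> (K * r ^ n / (1 - r) < eps / 2)%R).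
    { intros n Hn. specialize (HN n Hn). pose proof (pow_le r n ltac:(lra)).
      apply (Rmult_lt_compat_l (K + 1)) in HN; [|lra].
      replace ((K + 1) * (eps / 2 * (1 - r) / (K + 1)))%R with (eps / 2 * (1 - r))%R in HN
        by (field; lra).
      apply (Rmult_lt_reg_r (1 - r)); [lra|].
      unfold Rdiv. rewrite Rmult_assoc, Rinv_l, Rmult_1_r by lra. nra. }
    exists N. intros n m Hn Hm.
    destruct (Nat.le_ge_cases n m).
    + replace m with (n + (m - n))%nat by lia. rewrite <- Cmod_opp.
      replace (- (u n - u (n + (m - n))%nat)) with (u (n + (m - n))%nat - u n) by ring.
      specialize (G n (m - n)%nat). specialize (Hsmall n Hn). lra.
    + replace n with (m + (n - m))%nat by lia.
      specialize (G m (n - m)%nat). specialize (Hsmall m Hm). lra.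
  - exists l. split; auto. intros n.
    apply (cv_bound (fun k => u (k + n)%nat - u n)).
    + apply cv_minus; [apply cv_shift; auto|apply cv_const].
    + intros k. rewrite Nat.add_comm. apply G.
Qed.

(** * The infinite product (x;p)_oo *)

Lemma ppart_upper_bound x p N : (Cmod p < 1)%R ->
  (Cmod (ppart x p N) <= exp (Cmod x / (1 - Cmod p)))%R.
Proof.
  intros Hp. pose proof (Cmod_ge_0 p). pose proof (Cmod_ge_0 x).
  enough (Cmod (ppart x p N) <= exp (Cmod x * (1 - Cmod p ^ N) / (1 - Cmod p)))%R.
  { eapply Rle_trans; [eassumption|]. apply exp_le_mono. unfold Rdiv.
    apply Rmult_le_compat_r; [apply Rlt_le, Rinv_0_lt_compat; lra|].
    pose proof (pow_le (Cmod p) N H). nra. }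
  induction N as [|N IH].
  - simpl. rewrite Cmod_1. replace (Cmod x * (1 - 1) / (1 - Cmod p))%R with 0%R by (field; lra).
    rewrite exp_0; lra.
  - simpl ppart. rewrite Cmod_mult.
    replace (Cmod x * (1 - Cmod p ^ S N) / (1 - Cmod p))%R with
      (Cmod x * (1 - Cmod p ^ N) / (1 - Cmod p) + Cmod x * Cmod p ^ N)%R by (simpl; field; lra).
    rewrite exp_plus. apply Rmult_le_compat; try apply Cmod_ge_0; auto.
    eapply Rle_trans; [apply Cmod_1_minus_le|]. rewrite Cmod_mult, cpow_Cpow, Cmod_pow.
    apply exp_ineq1_le.
Qed.

Lemma ppart_cv_qinf x p : (Cmod p < 1)%R -> cv (ppart x p) (qinf x p).
Proof.
  intros Hp. pose proof (Cmod_ge_0 p).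
  destruct (cv_of_geometric_increments (ppart x p) (exp (Cmod x / (1 - Cmod p)) * Cmod x) (Cmod p))
    as [l [Hl _]].
  - lra.
  - intros n. simpl ppart.
    replace (ppart x p n * (1 - x * cpow p n) - ppart x p n) with (- (ppart x p n * x * cpow p n))
      by ring.
    rewrite Cmod_opp, !Cmod_mult, cpow_Cpow, Cmod_pow.
    pose proof (ppart_upper_bound x p n Hp). pose proof (Cmod_ge_0 x).
    pose proof (pow_le (Cmod p) n H).
    apply Rmult_le_compat_r; auto. apply Rmult_le_compat_r; auto.
  - unfold qinf. rewrite (cv_lim _ _ Hl). auto.
Qed.

Lemma ppart_S_l x p N : ppart x p (S N) = (1 - x) * ppart (x * p) p N.
Proof.
  induction N as [|N IH]; [simpl; ring|].
  change (ppart x p (S (S N))) with (ppart x p (S N) * (1 - x * cpow p (S N))).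
  rewrite IH. simpl. ring.
Qed.

Lemma qinf_S_l x p : (Cmod p < 1)%R -> qinf x p = (1 - x) * qinf (x * p) p.
Proof.
  intros Hp. apply (cv_unique (fun N => ppart x p (N + 1)%nat)).
  - apply cv_shift, ppart_cv_qinf; auto.
  - apply (cv_ext (fun N => (1 - x) * ppart (x * p) p N)).
    + intros; rewrite Nat.add_1_r, ppart_S_l; auto.
    + apply cv_scal, ppart_cv_qinf; auto.
Qed.

Lemma qinf_0_l p : (Cmod p < 1)%R -> qinf 0 p = 1.
Proof.
  intros Hp. apply (cv_unique (ppart 0 p)); [apply ppart_cv_qinf; auto|].
  apply (cv_ext (fun _ => 1)); [|apply cv_const].
  intros N; induction N as [|N IH]; simpl; rewrite <- ?IH; ring.
Qed.

Lemma theta_inv (x p : C) : (Cmod p < 1)%R -> x <> 0 -> theta (/ x) p = - / x * theta x p.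
Proof.
  intros Hp Hx. unfold theta.
  rewrite (qinf_S_l (/ x) p Hp), (qinf_S_l x p Hp).
  replace (/ x * p) with (p / x) by (field; auto).
  replace (p / / x) with (x * p) by (field; auto).
  field; auto.
Qed.

Lemma theta_0_r (x : C) : x <> 0 -> theta x 0 = 1 - x.
Proof.
  intros Hx. assert (H0 : (Cmod 0 < 1)%R) by (rewrite Cmod_0; lra).
  unfold theta. rewrite (qinf_S_l x 0 H0).
  replace (0 / x) with (RtoC 0) by (field; auto). replace (x * 0) with (RtoC 0) by ring.
  rewrite qinf_0_l by auto. ring.
Qed.

Lemma one_minus_ge_exp (s r : R) : (0 <= s <= r)%R -> (r < 1)%R ->
  (exp (- (s / (1 - r))) <= 1 - s)%R.
Proof.
  intros Hs Hr. pose proof (exp_ineq1_le (s / (1 - r))).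
  assert (H1 : (1 <= exp (s / (1 - r)) * (1 - s))%R).
  { assert (1 <= (1 + s / (1 - r)) * (1 - s))%R.
    { replace ((1 + s / (1 - r)) * (1 - s))%R with (1 + s * (r - s) / (1 - r))%R by (field; lra).
      assert (0 <= s * (r - s) / (1 - r))%R by (apply Rdiv_le_0_compat; nra). lra. }
    assert (0 <= 1 - s)%R by lra. nra. }
  rewrite exp_Ropp. pose proof (exp_pos (s / (1 - r))).
  apply (Rmult_le_reg_l (exp (s / (1 - r)))); auto. rewrite Rinv_r by lra. lra.
Qed.

Lemma ppart_self_lower_bound p N : (Cmod p < 1)%R ->
  (exp (- (Cmod p / ((1 - Cmod p) * (1 - Cmod p)))) <= Cmod (ppart p p N))%R.
Proof.
  intros Hp. set (r := Cmod p). pose proof (Cmod_ge_0 p) as Hr0. fold r in Hr0, Hp.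
  enough (exp (- (r * (1 - r ^ N) / ((1 - r) * (1 - r)))) <= Cmod (ppart p p N))%R.
  { eapply Rle_trans; [|eassumption]. apply exp_le_mono, Ropp_le_contravar.
    pose proof (pow_le r N Hr0). unfold Rdiv. apply Rmult_le_compat_r; [|nra].
    apply Rlt_le, Rinv_0_lt_compat. nra. }
  induction N as [|N IH].
  - simpl. rewrite Cmod_1. replace (r * (1 - 1) / ((1 - r) * (1 - r)))%R with 0%R by (field; lra).
    rewrite Ropp_0, exp_0. lra.
  - simpl ppart. rewrite Cmod_mult.
    replace (- (r * (1 - r ^ S N) / ((1 - r) * (1 - r))))%R with
      (- (r * (1 - r ^ N) / ((1 - r) * (1 - r))) + - (r * r ^ N / (1 - r)))%R
      by (simpl; field; lra).
    rewrite exp_plus. apply Rmult_le_compat; try (left; apply exp_pos); auto.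
    eapply Rle_trans; [|apply Cmod_1_minus_ge]. rewrite Cmod_mult, cpow_Cpow, Cmod_pow. fold r.
    apply one_minus_ge_exp; [|lra]. pose proof (pow_le r N Hr0).
    pose proof (pow_le_1 r N ltac:(lra)). split; nra.
Qed.

Lemma ppart_self_nz p N : (Cmod p < 1)%R -> ppart p p N <> 0.
Proof.
  intros Hp E. pose proof (ppart_self_lower_bound p N Hp) as H. rewrite E, Cmod_0 in H.
  pose proof (exp_pos (- (Cmod p / ((1 - Cmod p) * (1 - Cmod p))))). lra.
Qed.

Lemma qinf_self_nz p : (Cmod p < 1)%R -> qinf p p <> 0.
Proof.
  intros Hp E. set (c := exp (- (Cmod p / ((1 - Cmod p) * (1 - Cmod p))))).
  destruct (ppart_cv_qinf p p Hp c (exp_pos _)) as [N HN]. specialize (HN N (le_n _)).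
  rewrite E in HN. replace (ppart p p N - 0) with (ppart p p N) in HN by ring.
  pose proof (ppart_self_lower_bound p N Hp). fold c in H. lra.
Qed.

Lemma csum_ext (f g : nat -> C) n : (forall k, (k <= n)%nat -> f k = g k) -> csum f n = csum g n.
Proof. induction n; intros H; simpl; [apply H; lia|rewrite IHn, H; auto]. Qed.

Lemma csum_plus (f g : nat -> C) n : csum (fun k => f k + g k) n = csum f n + csum g n.
Proof. induction n; simpl; auto. rewrite IHn; ring. Qed.

Lemma csum_scal c (f : nat -> C) n : csum (fun k => c * f k) n = c * csum f n.
Proof. induction n; simpl; auto. rewrite IHn; ring. Qed.

Lemma csum_const_0 n : csum (fun _ => 0) n = 0.
Proof. induction n; simpl; [|rewrite IHn]; ring. Qed.

Lemma csum_S_l (f : nat -> C) n : csum f (S n) = f O + csum (fun k => f (S k)) n.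
Proof. induction n; simpl; auto. simpl in IHn. rewrite IHn; ring. Qed.

Lemma csum_exchange (a : nat -> nat -> C) n m :
  csum (fun i => csum (fun k => a i k) m) n = csum (fun k => csum (fun i => a i k) n) m.
Proof. induction n; simpl; [reflexivity|]. rewrite IHn, <- csum_plus. reflexivity. Qed.

Lemma csum_rev (g : nat -> C) m : csum g m = csum (fun i => g (m - i)%nat) m.
Proof.
  revert g. induction m as [|m IH]; intros g; [reflexivity|].
  rewrite csum_S_l, IH.
  change (csum (fun i => g (S m - i)%nat) (S m)) with
    (csum (fun i => g (S m - i)%nat) m + g (S m - S m)%nat).
  rewrite Nat.sub_diag, (csum_ext _ (fun i => g (S m - i)%nat)); [ring|].
  intros k Hk. f_equal. lia.
Qed.

Lemma csum_triangle_S (f : nat -> nat -> C) n :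
  csum (fun k => csum (f k) (S n - k)) (S n) =
  csum (fun k => csum (f k) (n - k)) n + csum (fun k => f k (S n - k)%nat) (S n).
Proof.
  change (csum (fun k => csum (f k) (S n - k)) (S n)) with
    (csum (fun k => csum (f k) (S n - k)) n + csum (f (S n)) (S n - S n)).
  change (csum (fun k => f k (S n - k)%nat) (S n)) with
    (csum (fun k => f k (S n - k)%nat) n + f (S n) (S n - S n)%nat).
  rewrite Nat.sub_diag. simpl (csum (f (S n)) 0).
  rewrite (csum_ext (fun k => csum (f k) (S n - k)) (fun k => csum (f k) (n - k) + f k (S n - k)%nat)).
  - rewrite csum_plus. ring.
  - intros k Hk. replace (S n - k)%nat with (S (n - k)) by lia. reflexivity.
Qed.

Lemma csum_triangle (f : nat -> nat -> C) n :
  csum (fun k => csum (f k) (n - k)) n = csum (fun i => csum (fun k => f k i) (n - i)) n.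
Proof.
  induction n as [|n IH]; [reflexivity|].
  rewrite csum_triangle_S, IH, (csum_triangle_S (fun i k => f k i)). f_equal.
  rewrite csum_rev. apply csum_ext. intros i Hi. f_equal. lia.
Qed.

Lemma cv_csum (u : nat -> nat -> C) (l : nat -> C) J :
  (forall i, cv (u i) (l i)) -> cv (fun N => csum (fun i => u i N) J) (csum l J).
Proof. induction J; intros H; simpl; [apply H|apply cv_plus; auto]. Qed.

Lemma Cmod_csum_tail (f : nat -> C) (L r : R) J N : (0 <= r < 1)%R -> (0 <= L)%R -> (J <= N)%nat ->
  (forall i, (J < i)%nat -> (i <= N)%nat -> (Cmod (f i) <= L * r ^ i)%R) ->
  (Cmod (csum f N - csum f J) <= L * r ^ (S J) / (1 - r))%R.
Proof.
  intros Hr HL HJN H.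
  assert (G : forall d, (J + d <= N)%nat ->
    (Cmod (csum f (J + d) - csum f J) <= L * (r ^ (S J) - r ^ (S (J + d))) / (1 - r))%R).
  { induction d as [|d IH]; intros Hd.
    - rewrite Nat.add_0_r. replace (csum f J - csum f J) with (RtoC 0) by ring. rewrite Cmod_0.
      right. field. lra.
    - rewrite Nat.add_succ_r. simpl csum.
      replace (csum f (J + d) + f (S (J + d)) - csum f J) with
        ((csum f (J + d) - csum f J) + f (S (J + d))) by ring.
      eapply Rle_trans; [apply Cmod_triangle|].
      eapply Rle_trans; [apply Rplus_le_compat; [apply IH; lia|apply H; lia]|].
      right. simpl. field. lra. }
  replace N with (J + (N - J))%nat by lia.
  eapply Rle_trans; [apply G; lia|]. unfold Rdiv. apply Rmult_le_compat_r.
  - apply Rlt_le, Rinv_0_lt_compat; lra.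
  - pose proof (pow_le r (S (J + (N - J))) ltac:(lra)). nra.
Qed.

(** * Bilateral series *)

Definition zsym (f : Z -> C) (i : nat) : C :=
  match i with O => f 0%Z | S _ => f (Z.of_nat i) + f (- Z.of_nat i)%Z end.

Definition zpart (f : Z -> C) (N : nat) : C := csum (zsym f) N.

(* Componentwise limit, as in [qinf]; meaningful only when the partial sums converge. *)
Definition zsum (f : Z -> C) : C :=
  (real (Lim_seq (fun N => Re (zpart f N))), real (Lim_seq (fun N => Im (zpart f N)))).

Definition geom_dominated (f : Z -> C) (c r : R) : Prop :=
  forall j, (Cmod (f j) <= c * r ^ (Z.abs_nat j))%R.

Lemma abs_nat_opp z : Z.abs_nat (- z) = Z.abs_nat z.
Proof. destruct z; reflexivity. Qed.

Lemma zpart_S f n : zpart f (S n) = zpart f n + zsym f (S n).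
Proof. reflexivity. Qed.

Lemma zsum_of_cv f l : cv (zpart f) l -> zsum f = l.
Proof. intros H. apply cv_lim; auto. Qed.

Lemma zsum_ext_zpart f g : (forall N, zpart f N = zpart g N) -> zsum f = zsum g.
Proof.
  intros H. unfold zsum. rewrite (Lim_seq_ext _ (fun N => Re (zpart g N))).
  - rewrite (Lim_seq_ext (fun N => Im (zpart f N)) (fun N => Im (zpart g N))); auto.
    intros; rewrite H; auto.
  - intros; rewrite H; auto.
Qed.

Lemma zpart_ext (f g : Z -> C) N : (forall j, f j = g j) -> zpart f N = zpart g N.
Proof. intros H. apply csum_ext. intros [|k] _; simpl; rewrite ?H; auto. Qed.

Lemma zsum_ext (f g : Z -> C) : (forall j, f j = g j) -> zsum f = zsum g.
Proof. intros H. apply zsum_ext_zpart. intros; apply zpart_ext; auto. Qed.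

Lemma zpart_scal k f N : zpart (fun j => k * f j) N = k * zpart f N.
Proof. unfold zpart. rewrite <- csum_scal. apply csum_ext. intros [|i] _; simpl; ring. Qed.

Lemma zpart_minus f g N : zpart (fun j => f j - g j) N = zpart f N - zpart g N.
Proof.
  unfold zpart. replace (csum (zsym f) N - csum (zsym g) N)
    with (csum (zsym f) N + (-1) * csum (zsym g) N) by ring.
  rewrite <- csum_scal, <- csum_plus. apply csum_ext. intros [|i] _; simpl; ring.
Qed.

Lemma zsym_csum (g : Z -> nat -> C) N i :
  zsym (fun m => csum (g m) N) i = csum (fun k => zsym (fun m => g m k) i) N.
Proof. destruct i; simpl; [reflexivity|]. rewrite <- csum_plus. reflexivity. Qed.

Lemma zpart_exchange (w : Z -> Z -> C) N :
  zpart (fun m => zpart (w m) N) N = zpart (fun d => zpart (fun m => w m d) N) N.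
Proof.
  unfold zpart. rewrite (csum_ext _ (fun i => csum (fun k => zsym (fun m => zsym (w m) k) i) N))
    by (intros; apply zsym_csum).
  rewrite csum_exchange. apply csum_ext. intros k _.
  rewrite zsym_csum. apply csum_ext. intros i _. destruct i, k; simpl; ring.
Qed.

Lemma geom_dominated_nonneg f c r : geom_dominated f c r -> (0 <= c)%R.
Proof. intros H. specialize (H 0%Z). simpl in H. pose proof (Cmod_ge_0 (f 0%Z)). lra. Qed.

Lemma geom_dominated_zsym f c r n : geom_dominated f c r ->
  (Cmod (zsym f (S n)) <= 2 * c * r ^ S n)%R.
Proof.
  intros H. eapply Rle_trans; [apply Cmod_triangle|].
  pose proof (H (Z.of_nat (S n))) as H1. pose proof (H (- Z.of_nat (S n))%Z) as H2.
  rewrite abs_nat_opp in H2. rewrite Zabs2Nat.id in H1, H2. lra.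
Qed.

Lemma geom_dominated_scal k f c r : geom_dominated f c r ->
  geom_dominated (fun j => k * f j) (Cmod k * c) r.
Proof.
  intros H j. rewrite Cmod_mult, Rmult_assoc. apply Rmult_le_compat_l; auto. apply Cmod_ge_0.
Qed.

Lemma geom_dominated_opp f c r : geom_dominated f c r -> geom_dominated (fun j => f (- j)%Z) c r.
Proof. intros H j. rewrite <- abs_nat_opp. apply H. Qed.

Lemma geom_dominated_shift f c r s : (0 < r <= 1)%R -> geom_dominated f c r ->
  geom_dominated (fun j => f (j + s)%Z) (c / r ^ Z.abs_nat s) r.
Proof.
  intros Hr H j. pose proof (geom_dominated_nonneg _ _ _ H). eapply Rle_trans; [apply H|].
  pose proof (pow_lt r (Z.abs_nat s) ltac:(lra)).
  unfold Rdiv. rewrite Rmult_assoc. apply Rmult_le_compat_l; auto.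
  apply (Rmult_le_reg_l (r ^ Z.abs_nat s)); auto.
  rewrite <- Rmult_assoc, Rinv_r, Rmult_1_l by lra. rewrite <- pow_add.
  apply pow_le_antimono; [lra|lia].
Qed.

Lemma zsum_cv f c r : (0 <= r < 1)%R -> geom_dominated f c r ->
  cv (zpart f) (zsum f) /\
  forall N, (Cmod (zsum f - zpart f N) <= 2 * c * r * r ^ N / (1 - r))%R.
Proof.
  intros Hr H.
  assert (Hs : forall n, (Cmod (zpart f (S n) - zpart f n) <= 2 * c * r * r ^ n)%R).
  { intros n. rewrite zpart_S.
    replace (zpart f n + zsym f (S n) - zpart f n) with (zsym f (S n)) by ring.
    eapply Rle_trans; [apply (geom_dominated_zsym _ _ _ _ H)|]. right; simpl; ring. }
  destruct (cv_of_geometric_increments (zpart f) (2 * c * r) r Hr Hs) as [l [Hl Hb]].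
  rewrite (zsum_of_cv f l Hl). auto.
Qed.

Lemma zpart_bound f c r N : (0 <= r < 1)%R -> geom_dominated f c r ->
  (Cmod (zpart f N) <= c * (1 + 2 * r / (1 - r)))%R.
Proof.
  intros Hr H. pose proof (geom_dominated_nonneg _ _ _ H) as Hc.
  enough (Cmod (zpart f N) <= c * (1 + 2 * r * (1 - r ^ N) / (1 - r)))%R.
  { eapply Rle_trans; [eassumption|]. apply Rmult_le_compat_l; auto.
    pose proof (pow_le r N ltac:(lra)).
    assert (0 <= 2 * r * r ^ N / (1 - r))%R by (apply Rdiv_le_0_compat; nra).
    replace (2 * r * (1 - r ^ N) / (1 - r))%R with (2 * r / (1 - r) - 2 * r * r ^ N / (1 - r))%R
      by (field; lra).
    lra. }
  induction N as [|N IH].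
  - unfold zpart; simpl. replace (c * (1 + 2 * r * (1 - 1) / (1 - r)))%R with c by (field; lra).
    specialize (H 0%Z). simpl in H. lra.
  - rewrite zpart_S. eapply Rle_trans; [apply Cmod_triangle|].
    pose proof (geom_dominated_zsym _ _ _ N H).
    replace (c * (1 + 2 * r * (1 - r ^ S N) / (1 - r)))%R with
      (c * (1 + 2 * r * (1 - r ^ N) / (1 - r)) + 2 * c * r ^ S N)%R by (simpl; field; lra).
    lra.
Qed.

Lemma zsum_bound f c r : (0 <= r < 1)%R -> geom_dominated f c r ->
  (Cmod (zsum f) <= c * (1 + 2 * r / (1 - r)))%R.
Proof.
  intros Hr H. apply (cv_bound _ _ _ (proj1 (zsum_cv f c r Hr H))).
  intros; apply zpart_bound; auto.
Qed.

Lemma zsum_scal k f c r : (0 <= r < 1)%R -> geom_dominated f c r ->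
  zsum (fun j => k * f j) = k * zsum f.
Proof.
  intros Hr H. apply zsum_of_cv. apply (cv_ext (fun N => k * zpart f N)).
  - intros; rewrite zpart_scal; auto.
  - apply cv_scal, (zsum_cv f c r Hr H).
Qed.

Lemma zsum_opp f : zsum (fun j => f (- j)%Z) = zsum f.
Proof. apply zsum_ext_zpart. intros N. apply csum_ext. intros [|k] _; simpl; [auto|ring]. Qed.

Lemma zpart_shift1 f N :
  zpart (fun j => f (j + 1)%Z) N = zpart f N + f (Z.of_nat (S N)) - f (- Z.of_nat N)%Z.
Proof.
  induction N as [|N IH]; [unfold zpart; simpl; ring|].
  rewrite !zpart_S, IH. unfold zsym.
  replace (Z.of_nat (S N) + 1)%Z with (Z.of_nat (S (S N))) by lia.
  replace (- Z.of_nat (S N) + 1)%Z with (- Z.of_nat N)%Z by lia. ring.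
Qed.

Lemma zsum_shift1 f c r : (0 < r < 1)%R -> geom_dominated f c r ->
  zsum (fun j => f (j + 1)%Z) = zsum f.
Proof.
  intros Hr H. pose proof (geom_dominated_nonneg _ _ _ H). apply zsum_of_cv.
  apply (cv_ext (fun N => zpart f N + (f (Z.of_nat (S N)) - f (- Z.of_nat N)%Z)));
    [intros; rewrite zpart_shift1; ring|].
  replace (zsum f) with (zsum f + 0) by ring. apply cv_plus.
  - apply (zsum_cv f c r); auto; lra.
  - apply (cv_geometric_0 _ (2 * c) r); [lra|]. intros n.
    eapply Rle_trans; [apply Cmod_triangle|]. rewrite Cmod_opp.
    pose proof (H (Z.of_nat (S n))) as H1. pose proof (H (- Z.of_nat n)%Z) as H2.
    rewrite abs_nat_opp in H2. rewrite Zabs2Nat.id in H1, H2. rewrite <- tech_pow_Rmult in H1.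
    pose proof (pow_le r n ltac:(lra)).
    assert (c * (r * r ^ n) <= c * r ^ n)%R by (apply Rmult_le_compat_l; nra). lra.
Qed.

Lemma zsum_shift_nat k f c r : (0 < r < 1)%R -> geom_dominated f c r ->
  zsum (fun j => f (j + Z.of_nat k)%Z) = zsum f.
Proof.
  revert f c. induction k as [|k IH]; intros f c Hr H.
  - apply zsum_ext. intros; f_equal; lia.
  - rewrite <- (IH f c Hr H).
    rewrite <- (zsum_shift1 (fun j => f (j + Z.of_nat k)%Z) (c / r ^ Z.abs_nat (Z.of_nat k)) r Hr).
    + apply zsum_ext; intros; f_equal; lia.
    + apply geom_dominated_shift; auto; lra.
Qed.

Lemma zsum_shift s f c r : (0 < r < 1)%R -> geom_dominated f c r ->
  zsum (fun j => f (j + s)%Z) = zsum f.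
Proof.
  intros Hr H. destruct (Z_le_gt_dec 0 s).
  - replace s with (Z.of_nat (Z.to_nat s)) by lia. apply (zsum_shift_nat _ f c r); auto.
  - rewrite <- (zsum_opp (fun j => f (j + s)%Z)), <- (zsum_opp f).
    rewrite <- (zsum_shift_nat (Z.to_nat (- s)) _ c r Hr (geom_dominated_opp _ _ _ H)).
    apply zsum_ext; intros; f_equal; lia.
Qed.

Lemma zsum_sub_opp g c r m : (0 < r < 1)%R -> geom_dominated g c r ->
  zsum (fun d => g (m - d)%Z) = zsum g.
Proof.
  intros Hr H.
  rewrite (zsum_ext _ (fun d => (fun j => g (- j)%Z) (d + - m)%Z)) by (intros; f_equal; lia).
  rewrite (zsum_shift (- m) _ c r Hr (geom_dominated_opp _ _ _ H)).
  apply zsum_opp.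
Qed.

Lemma zpart_even_odd f N :
  zpart (fun k => f (2 * k)%Z) N + zpart (fun k => f (2 * k + 1)%Z) N
  = zpart f (2 * N + 1) - f (- Z.of_nat (2 * N + 1))%Z.
Proof.
  induction N as [|N IH]; [unfold zpart; simpl; ring|].
  replace (2 * S N + 1)%nat with (S (S (2 * N + 1))) by lia.
  rewrite !zpart_S. unfold zsym.
  replace (2 * Z.of_nat (S N) + 1)%Z with (Z.of_nat (S (S (2 * N + 1)))) by lia.
  replace (2 * - Z.of_nat (S N) + 1)%Z with (- Z.of_nat (2 * N + 1))%Z by lia.
  replace (2 * Z.of_nat (S N))%Z with (Z.of_nat (S (2 * N + 1))) by lia.
  replace (2 * - Z.of_nat (S N))%Z with (- Z.of_nat (S (2 * N + 1)))%Z by lia.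
  transitivity (zpart (fun k => f (2 * k)%Z) N + zpart (fun k => f (2 * k + 1)%Z) N
    + (f (Z.of_nat (S (2 * N + 1))) + f (- Z.of_nat (S (2 * N + 1)))%Z)
    + (f (Z.of_nat (S (S (2 * N + 1)))) + f (- Z.of_nat (2 * N + 1))%Z)); [ring|].
  rewrite IH. unfold zsym. ring.
Qed.

Lemma zsum_even_odd f c r : (0 < r < 1)%R -> geom_dominated f c r ->
  zsum f = zsum (fun k => f (2 * k)%Z) + zsum (fun k => f (2 * k + 1)%Z).
Proof.
  intros Hr H. pose proof (geom_dominated_nonneg _ _ _ H) as Hc.
  assert (D : forall s, (0 <= s <= 1)%Z -> geom_dominated (fun k => f (2 * k + s)%Z) c r).
  { intros s Hs j. eapply Rle_trans; [apply H|].
    apply Rmult_le_compat_l; auto. apply pow_le_antimono; [lra|lia]. }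
  rewrite (zsum_ext (fun k => f (2 * k)%Z) (fun k => f (2 * k + 0)%Z)) by (intros; f_equal; lia).
  apply (cv_unique (fun N => zpart (fun k => f (2 * k + 0)%Z) N + zpart (fun k => f (2 * k + 1)%Z) N)).
  - apply (cv_ext (fun N => zpart f (2 * N + 1) - f (- Z.of_nat (2 * N + 1))%Z));
      [intros; rewrite <- zpart_even_odd; f_equal; apply zpart_ext; intros; f_equal; lia|].
    replace (zsum f) with (zsum f - 0) by ring. apply cv_minus.
    + apply (cv_comp (zpart f)); [intros N; exists N; intros; lia|].
      apply (zsum_cv f c r); auto; lra.
    + apply (cv_geometric_0 _ c r); [lra|]. intros n. eapply Rle_trans; [apply H|].
      apply Rmult_le_compat_l; auto. apply pow_le_antimono; [lra|lia].
  - apply cv_plus; apply (zsum_cv _ c r); try lra; apply D; lia.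
Qed.

Lemma zpart_square_cv (w : Z -> Z -> C) c r : (0 < r < 1)%R ->
  (forall m d, (Cmod (w m d) <= c * r ^ Z.abs_nat m * r ^ Z.abs_nat d)%R) ->
  cv (fun N => zpart (fun m => zpart (w m) N) N) (zsum (fun m => zsum (w m))).
Proof.
  intros Hr H.
  assert (Hc : (0 <= c)%R).
  { specialize (H 0%Z 0%Z). simpl in H. pose proof (Cmod_ge_0 (w 0%Z 0%Z)). lra. }
  set (B := (1 + 2 * r / (1 - r))%R).
  assert (Dm : forall m, geom_dominated (w m) (c * r ^ Z.abs_nat m) r) by (intros m d; apply H).
  assert (DF : geom_dominated (fun m => zsum (w m)) (c * B) r).
  { intros m. eapply Rle_trans; [apply (zsum_bound _ (c * r ^ Z.abs_nat m) r); [lra|apply Dm]|].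
    right; unfold B; ring. }
  apply (cv_ext (fun N => zpart (fun m => zsum (w m)) N
                          - zpart (fun m => zsum (w m) - zpart (w m) N) N));
    [intros N; rewrite zpart_minus; ring|].
  replace (zsum (fun m => zsum (w m))) with (zsum (fun m => zsum (w m)) - 0) by ring.
  apply cv_minus; [apply (zsum_cv _ (c * B) r); [lra|apply DF]|].
  apply (cv_geometric_0 _ (2 * c * r / (1 - r) * B) r); [lra|]. intros n.
  eapply Rle_trans; [apply (zpart_bound _ (2 * c * r * r ^ n / (1 - r)) r); [lra|]|].
  - intros m. eapply Rle_trans; [apply (zsum_cv _ (c * r ^ Z.abs_nat m) r); [lra|apply Dm]|].
    right. field. lra.
  - right. unfold B. field. lra.
Qed.

Lemma zsum_exchange (w : Z -> Z -> C) c r : (0 < r < 1)%R ->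
  (forall m d, (Cmod (w m d) <= c * r ^ Z.abs_nat m * r ^ Z.abs_nat d)%R) ->
  zsum (fun m => zsum (w m)) = zsum (fun d => zsum (fun m => w m d)).
Proof.
  intros Hr H. apply (cv_unique (fun N => zpart (fun m => zpart (w m) N) N)).
  - apply (zpart_square_cv w c r Hr H).
  - apply (cv_ext (fun N => zpart (fun d => zpart (fun m => w m d) N) N));
      [intros; symmetry; apply zpart_exchange|].
    apply (zpart_square_cv (fun d m => w m d) c r Hr).
    intros d m. rewrite Rmult_assoc, (Rmult_comm (r ^ _)), <- Rmult_assoc. apply H.
Qed.

Definition zpow (x : C) (j : Z) : C :=
  if (0 <=? j)%Z then x ^ Z.to_nat j else (/ x) ^ Z.to_nat (- j).

Lemma zpow_0 x : zpow x 0 = 1.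
Proof. reflexivity. Qed.

Lemma zpow_1 (x : C) : zpow x 1 = x.
Proof. unfold zpow. simpl. ring. Qed.

Lemma zpow_of_nat x n : zpow x (Z.of_nat n) = x ^ n.
Proof. unfold zpow. destruct (Z.leb_spec 0 (Z.of_nat n)); [|lia]. rewrite Nat2Z.id. auto. Qed.

Lemma zpow_succ (x : C) a : x <> 0 -> zpow x (a + 1) = zpow x a * x.
Proof.
  intros Hx. unfold zpow. destruct (Z.leb_spec 0 a); destruct (Z.leb_spec 0 (a + 1)); try lia.
  - replace (Z.to_nat (a + 1)) with (S (Z.to_nat a)) by lia. simpl. ring.
  - assert (a = -1)%Z by lia. subst. simpl. field; auto.
  - replace (Z.to_nat (- a)) with (S (Z.to_nat (- (a + 1)))) by lia. simpl. field; auto.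
Qed.

Lemma zpow_pred (x : C) a : x <> 0 -> zpow x (a - 1) = zpow x a / x.
Proof.
  intros Hx. replace (zpow x a) with (zpow x (a - 1 + 1)) by (f_equal; lia).
  rewrite zpow_succ by auto. field; auto.
Qed.

Lemma zpow_nz (x : C) a : x <> 0 -> zpow x a <> 0.
Proof. intros Hx. unfold zpow. destruct (0 <=? a)%Z; apply Cpow_nz; auto. apply Cinv_nz; auto. Qed.

Lemma zpow_add (x : C) a b : x <> 0 -> zpow x (a + b) = zpow x a * zpow x b.
Proof.
  intros Hx. induction b using Z.peano_ind.
  - rewrite Z.add_0_r, zpow_0. ring.
  - rewrite <- Z.add_1_r, Z.add_assoc, !zpow_succ, IHb by auto. ring.
  - rewrite <- Z.sub_1_r, Z.add_sub_assoc, !zpow_pred, IHb by auto. field; auto.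
Qed.

Lemma zpow_opp (x : C) a : x <> 0 -> zpow x (- a) = / zpow x a.
Proof.
  intros Hx. pose proof (zpow_nz x a Hx).
  apply (Cmult_eq_reg_l (zpow x a)); auto.
  rewrite <- zpow_add, Z.add_opp_diag_r, zpow_0 by auto. field; auto.
Qed.

Lemma zpow_mult_l (x y : C) a : x <> 0 -> y <> 0 -> zpow (x * y) a = zpow x a * zpow y a.
Proof.
  intros Hx Hy. assert (Hxy : x * y <> 0) by (apply Cmult_neq_0; auto).
  induction a using Z.peano_ind.
  - rewrite !zpow_0; ring.
  - rewrite <- Z.add_1_r, !zpow_succ, IHa by auto. ring.
  - rewrite <- Z.sub_1_r, !zpow_pred, IHa by auto. field; auto.
Qed.

Lemma zpow_inv_l (x : C) a : x <> 0 -> zpow (/ x) a = / zpow x a.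
Proof.
  intros Hx. pose proof (Cinv_nz x Hx).
  induction a using Z.peano_ind.
  - rewrite !zpow_0. field.
  - rewrite <- Z.add_1_r, !zpow_succ, IHa by auto. pose proof (zpow_nz x a Hx). field; auto.
  - rewrite <- Z.sub_1_r, !zpow_pred, IHa by auto. pose proof (zpow_nz x a Hx). field; auto.
Qed.

Lemma zpow_div_l (x y : C) a : x <> 0 -> y <> 0 -> zpow (x / y) a = zpow x a * / zpow y a.
Proof. intros. unfold Cdiv. rewrite zpow_mult_l, zpow_inv_l; auto. apply Cinv_nz; auto. Qed.

Lemma zpow_1_l k : zpow 1 k = 1.
Proof.
  induction k using Z.peano_ind; [reflexivity| |].
  - rewrite <- Z.add_1_r, zpow_succ, IHk by apply C1_nz. ring.
  - rewrite <- Z.sub_1_r, zpow_pred, IHk by apply C1_nz. field.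
Qed.

Lemma m1_nz : (-1 : C) <> 0.
Proof. intros E. injection E. lra. Qed.

Lemma zpow_m1_double k : zpow (-1) (2 * k) = 1.
Proof.
  replace (2 * k)%Z with (k + k)%Z by lia. rewrite zpow_add, <- zpow_mult_l by apply m1_nz.
  replace ((-1) * (-1) : C) with (RtoC 1) by ring. apply zpow_1_l.
Qed.

Lemma Cmod_zpow_m1 j : Cmod (zpow (-1) j) = 1%R.
Proof.
  assert (Hm : Cmod (-1) = 1%R) by (rewrite Cmod_R, Rabs_left; lra).
  unfold zpow. destruct (0 <=? j)%Z; rewrite Cmod_pow;
    [rewrite Hm|rewrite Cmod_inv, Hm by apply m1_nz]; rewrite ?Rinv_1; apply pow1.
Qed.

Lemma Cmod_zpow_le (x : C) j : x <> 0 -> (Cmod (zpow x j) <= (Cmod x + / Cmod x) ^ Z.abs_nat j)%R.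
Proof.
  intros Hx. pose proof (proj1 (Cmod_gt_0 x) Hx) as Hm. pose proof (Rinv_0_lt_compat _ Hm).
  unfold zpow. destruct (Z.leb_spec 0 j).
  - rewrite Cmod_pow. replace (Z.to_nat j) with (Z.abs_nat j) by lia.
    apply pow_incr. split; [apply Cmod_ge_0|lra].
  - rewrite Cmod_pow, Cmod_inv by auto. replace (Z.to_nat (- j)) with (Z.abs_nat j) by lia.
    apply pow_incr. lra.
Qed.

Lemma Cmod_zpow_nonneg (x : C) e : (0 <= e)%Z -> Cmod (zpow x e) = (Cmod x ^ Z.to_nat e)%R.
Proof. intros H. unfold zpow. destruct (Z.leb_spec 0 e); [apply Cmod_pow|lia]. Qed.

Definition triangle (j : Z) : Z := (j * (j - 1) / 2)%Z.

Lemma triangle_spec j : (2 * triangle j = j * (j - 1))%Z.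
Proof.
  unfold triangle. destruct (Z.Even_or_Odd j) as [[k Hk]|[k Hk]]; subst.
  - replace (2 * k * (2 * k - 1))%Z with ((k * (2 * k - 1)) * 2)%Z by ring.
    rewrite Z.div_mul by lia. ring.
  - replace ((2 * k + 1) * (2 * k + 1 - 1))%Z with ((k * (2 * k + 1)) * 2)%Z by ring.
    rewrite Z.div_mul by lia. ring.
Qed.

Fixpoint triangle_nat (n : nat) : nat :=
  match n with O => O | S m => (triangle_nat m + m)%nat end.

Lemma triangle_nat_spec n : (2 * Z.of_nat (triangle_nat n) = Z.of_nat n * (Z.of_nat n - 1))%Z.
Proof. induction n; simpl triangle_nat; [reflexivity|]. rewrite Nat2Z.inj_add, Nat2Z.inj_succ. lia. Qed.

Lemma gaussian_bounded (r b : R) : (0 <= r < 1)%R -> (0 < b)%R ->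
  exists M, forall n, (r ^ triangle_nat n * b ^ n <= M)%R.
Proof.
  intros Hr Hb. set (M := Rmax 1 b).
  assert (HM : (1 <= M /\ b <= M)%R) by (split; [apply Rmax_l|apply Rmax_r]).
  destruct (pow_eventually_lt r (/ b) Hr (Rinv_0_lt_compat _ Hb)) as [N HN].
  exists (M ^ N)%R.
  assert (H : forall n, (r ^ triangle_nat n * b ^ n <= M ^ Nat.min n N)%R).
  { induction n as [|n IH]; [simpl; lra|].
    simpl triangle_nat. rewrite pow_add, <- tech_pow_Rmult.
    replace (r ^ triangle_nat n * r ^ n * (b * b ^ n))%R
      with ((r ^ triangle_nat n * b ^ n) * (r ^ n * b))%R by ring.
    assert (0 <= r ^ triangle_nat n * b ^ n)%R
      by (apply Rmult_le_pos; apply pow_le; lra).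
    pose proof (pow_le r n ltac:(lra)). pose proof (pow_le_1 r n ltac:(lra)).
    destruct (le_lt_dec N n) as [HNn|HnN].
    - replace (Nat.min (S n) N) with (Nat.min n N) by lia.
      assert (r ^ n * b <= 1)%R.
      { specialize (HN n HNn). apply (Rmult_lt_compat_r b) in HN; auto.
        rewrite Rinv_l in HN by lra. lra. }
      nra.
    - replace (Nat.min (S n) N) with (S (Nat.min n N)) by lia. rewrite <- tech_pow_Rmult.
      rewrite Rmult_comm. apply Rmult_le_compat; auto; [nra|nra]. }
  intros n. eapply Rle_trans; [apply H|]. apply Rle_pow; [lra|lia].
Qed.

Lemma geom_dominated_gaussian (p z : C) (e : Z -> Z) (s : Z -> C) rho :
  (Cmod p < 1)%R -> z <> 0 -> (0 < rho)%R ->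
  (forall j, Z.of_nat (triangle_nat (Z.abs_nat j)) <= e j)%Z -> (forall j, (Cmod (s j) <= 1)%R) ->
  exists c, geom_dominated (fun j => s j * zpow p (e j) * zpow z j) c rho.
Proof.
  intros Hp Hz Hrho He Hs. pose proof (proj1 (Cmod_gt_0 z) Hz) as Hm.
  pose proof (Cmod_ge_0 p) as Hp0. set (a := (Cmod z + / Cmod z)%R).
  assert (Ha : (0 < a)%R) by (pose proof (Rinv_0_lt_compat _ Hm); unfold a; lra).
  destruct (gaussian_bounded (Cmod p) (a / rho) ltac:(lra) ltac:(apply Rdiv_lt_0_compat; auto))
    as [M HM].
  exists M. intros j. specialize (He j). specialize (HM (Z.abs_nat j)).
  unfold Rdiv in HM. rewrite Rpow_mult_distr, pow_inv in HM. pose proof (pow_lt rho (Z.abs_nat j) Hrho).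
  rewrite !Cmod_mult, Cmod_zpow_nonneg by lia.
  assert (HG : (Cmod p ^ triangle_nat (Z.abs_nat j) * a ^ Z.abs_nat j <= M * rho ^ Z.abs_nat j)%R).
  { apply (Rmult_le_compat_r (rho ^ Z.abs_nat j)) in HM; [|lra].
    rewrite !Rmult_assoc, Rinv_l, Rmult_1_r in HM by lra. lra. }
  eapply Rle_trans; [|apply HG].
  pose proof (Cmod_ge_0 (s j)). pose proof (Cmod_zpow_le z j Hz). pose proof (Cmod_ge_0 (zpow z j)).
  pose proof (pow_le (Cmod p) (Z.to_nat (e j)) Hp0).
  assert (Cmod p ^ Z.to_nat (e j) <= Cmod p ^ triangle_nat (Z.abs_nat j))%R
    by (apply pow_le_antimono; [lra|lia]).
  specialize (Hs j). apply Rmult_le_compat; try nra; auto.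
Qed.

Lemma triangle_nat_abs_le j s : (-1 <= s <= 1)%Z ->
  (Z.of_nat (triangle_nat (Z.abs_nat j)) <= j * j + s * j)%Z /\
  (Z.of_nat (triangle_nat (Z.abs_nat j)) <= triangle j)%Z.
Proof.
  intros Hs. pose proof (triangle_nat_spec (Z.abs_nat j)). pose proof (triangle_spec j).
  rewrite Nat2Z.inj_abs_nat in H.
  destruct (Z_le_gt_dec 0 j); [rewrite Z.abs_eq in H by lia|rewrite Z.abs_neq in H by lia];
    split; nia.
Qed.

(* [theta_series p x] is the Laurent series of (p;p)_oo theta(x;p) (Jacobi triple product). *)
Definition theta_term (p x : C) (j : Z) : C := zpow (-1) j * zpow p (triangle j) * zpow x j.
Definition theta_series (p x : C) : C := zsum (theta_term p x).

Definition gauss_term (p : C) (s : Z) (z : C) (k : Z) : C := zpow p (k * k + s * k) * zpow z k.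
Definition gauss_series (p : C) (s : Z) (z : C) : C := zsum (gauss_term p s z).

Lemma theta_term_dominated (p x : C) rho : (Cmod p < 1)%R -> x <> 0 -> (0 < rho)%R ->
  exists c, geom_dominated (theta_term p x) c rho.
Proof.
  intros Hp Hx Hrho. apply (geom_dominated_gaussian p x triangle (zpow (-1))); auto.
  - intros j. apply (triangle_nat_abs_le j 0); lia.
  - intros; rewrite Cmod_zpow_m1; lra.
Qed.

Lemma gauss_term_dominated (p : C) s (z : C) rho : (-1 <= s <= 1)%Z ->
  (Cmod p < 1)%R -> z <> 0 -> (0 < rho)%R -> exists c, geom_dominated (gauss_term p s z) c rho.
Proof.
  intros Hs Hp Hz Hrho.
  destruct (geom_dominated_gaussian p z (fun k => k * k + s * k)%Z (fun _ => 1) rho Hp Hz Hrho)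
    as [c Hc].
  - intros j. apply triangle_nat_abs_le; auto.
  - intros; rewrite Cmod_1; lra.
  - exists c. intros j. unfold gauss_term. rewrite <- (Cmult_1_l (zpow p _)). apply Hc.
Qed.

(** * The Jacobi triple product *)

Lemma tannery_0 (a : nat -> C) (b : nat -> nat -> C) (K r M : R) :
  (0 <= r < 1)%R -> (forall i, (Cmod (a i) <= K * r ^ i)%R) ->
  (forall N i, (i <= N)%nat -> (Cmod (b N i) <= M)%R) -> (forall i, cv (fun N => b N i) 0) ->
  cv (fun N => csum (fun i => a i * b N i) N) 0.
Proof.
  intros Hr Ha Hb Hb0 eps He.
  assert (HK : (0 <= K)%R) by (specialize (Ha O); pose proof (Cmod_ge_0 (a O)); simpl in Ha; lra).
  assert (HM : (0 <= M)%R) by (specialize (Hb O O (le_n _)); pose proof (Cmod_ge_0 (b O O)); lra).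
  destruct (pow_eventually_lt r (eps / 2 * (1 - r) / (K * M + 1)) Hr) as [J HJ].
  { apply Rdiv_lt_0_compat; [apply Rmult_lt_0_compat|]; nra. }
  assert (Htail : (K * M * r ^ S J / (1 - r) < eps / 2)%R).
  { specialize (HJ (S J) ltac:(lia)). pose proof (pow_le r (S J) ltac:(lra)).
    apply (Rmult_lt_compat_l (K * M + 1)) in HJ; [|nra].
    replace ((K * M + 1) * (eps / 2 * (1 - r) / (K * M + 1)))%R with (eps / 2 * (1 - r))%R in HJ
      by (field; nra).
    apply (Rmult_lt_reg_r (1 - r)); [lra|].
    unfold Rdiv. rewrite Rmult_assoc, Rinv_l, Rmult_1_r by lra. nra. }
  assert (Hhead : cv (fun N => csum (fun i => a i * b N i) J) 0).
  { rewrite <- (csum_const_0 J). apply (cv_csum (fun i N => a i * b N i)). intros i.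
    replace (RtoC 0) with (a i * 0) by ring. apply cv_scal, Hb0. }
  destruct (Hhead (eps / 2)%R ltac:(lra)) as [N1 HN1].
  exists (max J N1). intros N HN. specialize (HN1 N ltac:(lia)).
  replace (csum (fun i => a i * b N i) N - 0) with (csum (fun i => a i * b N i) N) by ring.
  replace (csum (fun i => a i * b N i) J - 0) with (csum (fun i => a i * b N i) J) in HN1 by ring.
  pose proof (Cmod_triangle (csum (fun i => a i * b N i) J)
    (csum (fun i => a i * b N i) N - csum (fun i => a i * b N i) J)) as T.
  replace (csum (fun i => a i * b N i) J
    + (csum (fun i => a i * b N i) N - csum (fun i => a i * b N i) J))
    with (csum (fun i => a i * b N i) N) in T by ring.
  assert (Rle (Cmod (csum (fun i => a i * b N i) N - csum (fun i => a i * b N i) J))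
               (K * M * r ^ S J / (1 - r))).
  { apply (Cmod_csum_tail _ (K * M) r); auto; [nra|lia|]. intros i _ Hi. rewrite Cmod_mult.
    replace (K * M * r ^ i)%R with (K * r ^ i * M)%R by ring.
    apply Rmult_le_compat; try apply Cmod_ge_0; auto. }
  lra.
Qed.

Lemma tannery (a : nat -> C) (b : nat -> nat -> C) (K r M : R) (beta S : C) :
  (0 <= r < 1)%R -> (forall i, (Cmod (a i) <= K * r ^ i)%R) ->
  (forall N i, (i <= N)%nat -> (Cmod (b N i) <= M)%R) -> (forall i, cv (fun N => b N i) beta) ->
  cv (csum a) S -> cv (fun N => csum (fun i => a i * b N i) N) (beta * S).
Proof.
  intros Hr Ha Hb Hbeta HS.
  apply (cv_ext (fun N => csum (fun i => a i * (b N i - beta)) N + beta * csum a N)).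
  { intros N. rewrite <- csum_scal, <- csum_plus. apply csum_ext. intros; ring. }
  replace (beta * S) with (0 + beta * S) by ring. apply cv_plus; [|apply cv_scal; auto].
  apply (tannery_0 _ _ K r (M + Cmod beta)); auto.
  - intros N i Hi. eapply Rle_trans; [apply Cmod_triangle|]. rewrite Cmod_opp.
    specialize (Hb N i Hi). lra.
  - intros i. replace (RtoC 0) with (beta - beta) by ring. apply cv_minus; [auto|apply cv_const].
Qed.

Lemma ppart_self_S (p : C) n : ppart p p (S n) = ppart p p n * (1 - p ^ (S n)).
Proof. simpl ppart. rewrite cpow_Cpow. simpl. ring. Qed.

Definition qbinom (p : C) M i : C :=
  if (i <=? M)%nat then ppart p p M / (ppart p p i * ppart p p (M - i)) else 0.

Lemma qbinom_0_r (p : C) M : (Cmod p < 1)%R -> qbinom p M 0 = 1.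
Proof.
  intros Hp. unfold qbinom. simpl. rewrite Nat.sub_0_r.
  pose proof (ppart_self_nz p M Hp). field. auto.
Qed.

Lemma qbinom_pascal (p : C) (Hp : (Cmod p < 1)%R) M k : (k <= M)%nat ->
  qbinom p (S M) (S k) = qbinom p M (S k) + p ^ (M - k) * qbinom p M k.
Proof.
  intros Hk. destruct (Nat.eq_dec k M) as [->|Hne].
  - unfold qbinom. rewrite !Nat.leb_refl, !Nat.sub_diag.
    replace (S M <=? M)%nat with false by (symmetry; apply Nat.leb_gt; lia).
    change (ppart p p 0) with (RtoC 1). change (p ^ 0) with (RtoC 1).
    pose proof (ppart_self_nz p M Hp). pose proof (ppart_self_nz p (S M) Hp).
    field. split; auto.
  - destruct (Nat.le_exists_sub (S k) M ltac:(lia)) as [d [Hd _]]. subst M.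
    unfold qbinom.
    replace (S k <=? S (d + S k))%nat with true by (symmetry; apply Nat.leb_le; lia).
    replace (S k <=? d + S k)%nat with true by (symmetry; apply Nat.leb_le; lia).
    replace (k <=? d + S k)%nat with true by (symmetry; apply Nat.leb_le; lia).
    replace (S (d + S k) - S k)%nat with (S d) by lia.
    replace (d + S k - S k)%nat with d by lia.
    replace (d + S k - k)%nat with (S d) by lia.
    pose proof (ppart_self_nz p k Hp). pose proof (ppart_self_nz p d Hp).
    pose proof (ppart_self_nz p (d + S k) Hp).
    pose proof (ppart_self_nz p (S k) Hp) as N4. pose proof (ppart_self_nz p (S d) Hp) as N5.
    rewrite !ppart_self_S in *.
    assert (1 - p ^ S k <> 0) by (intro E; apply N4; rewrite E; ring).
    assert (1 - p ^ S d <> 0) by (intro E; apply N5; rewrite E; ring).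
    replace (S (d + S k) - k)%nat with (S (S d)) by lia.
    replace (p ^ S (d + S k)) with (p ^ S d * p ^ S k) by (rewrite <- Cpow_add_r; f_equal; lia).
    field. repeat split; auto.
Qed.

Lemma ppart_rothe (p : C) (Hp : (Cmod p < 1)%R) (w : C) M :
  ppart w p M = csum (fun i => qbinom p M i * p ^ triangle_nat i * (- w) ^ i) M.
Proof.
  set (t M i := qbinom p M i * p ^ triangle_nat i * (- w) ^ i).
  assert (Ht0 : forall M, t M O = 1) by (intros; unfold t; rewrite qbinom_0_r by auto; simpl; ring).
  assert (Hstep : forall M k, (k <= M)%nat ->
    t (S M) (S k) = t M (S k) + (- w) * p ^ M * t M k).
  { intros M0 k Hk. unfold t. rewrite qbinom_pascal by auto.
    simpl triangle_nat. rewrite Cpow_add_r, Cpow_S.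
    replace (p ^ M0) with (p ^ (M0 - k) * p ^ k) by (rewrite <- Cpow_add_r; f_equal; lia).
    ring. }
  change (ppart w p M = csum (t M) M).
  induction M as [|M IH]; [symmetry; apply Ht0|].
  change (ppart w p (S M)) with (ppart w p M * (1 - w * cpow p M)).
  rewrite IH, cpow_Cpow, csum_S_l, Ht0.
  rewrite (csum_ext (fun k => t (S M) (S k)) (fun k => t M (S k) + (- w) * p ^ M * t M k))
    by (intros; apply Hstep; auto).
  rewrite csum_plus, csum_scal.
  replace (csum (fun k => t M (S k)) M) with (csum (t M) M - 1).
  - ring.
  - destruct M as [|M]; [unfold t, qbinom; simpl; field|].
    rewrite csum_S_l, Ht0. simpl csum at 2.
    replace (t (S M) (S (S M))) with (RtoC 0); [ring|].
    unfold t, qbinom. replace (S (S M) <=? S M)%nat with false by (symmetry; apply Nat.leb_gt; lia).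
    ring.
Qed.

Lemma ppart_add (p w : C) a b : ppart w p (a + b) = ppart w p a * ppart (w * p ^ a) p b.
Proof.
  induction b as [|b IH]; [rewrite Nat.add_0_r; simpl; ring|].
  rewrite Nat.add_succ_r. simpl ppart. rewrite IH, !cpow_Cpow, Cpow_add_r. ring.
Qed.

Lemma ppart_reflect (p x : C) N : p <> 0 -> x <> 0 ->
  ppart (x / p ^ N) p N = (- x) ^ N / p ^ triangle_nat (S N) * ppart (p / x) p N.
Proof.
  intros Hp Hx. induction N as [|N IH]; [simpl; field|].
  rewrite ppart_S_l.
  replace (x / p ^ S N * p) with (x / p ^ N) by (rewrite Cpow_S; field; split; auto; apply Cpow_nz; auto).
  rewrite IH. simpl ppart. rewrite cpow_Cpow. simpl triangle_nat. rewrite !Cpow_add_r, !Cpow_S.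
  pose proof (Cpow_nz p N Hp). pose proof (Cpow_nz p (triangle_nat N) Hp).
  field. repeat split; auto.
Qed.

Lemma theta_term_sub_nat (p x : C) (i N : nat) : p <> 0 -> x <> 0 ->
  theta_term p x (Z.of_nat i - Z.of_nat N) =
  p ^ triangle_nat (S N) / (- x) ^ N * (p ^ triangle_nat i * (- x / p ^ N) ^ i).
Proof.
  intros Hp Hx. pose proof m1_nz as Hm. unfold theta_term.
  replace ((- x / p ^ N) ^ i) with ((-1) ^ i * x ^ i / p ^ (N * i)).
  2: { unfold Cdiv. rewrite !Cpow_mult_l, Cpow_inv, Cpow_mult_r by (apply Cpow_nz; auto).
       replace (- x) with ((-1) * x) by ring. rewrite Cpow_mult_l. ring. }
  replace (- x) with ((-1) * x) by ring. rewrite Cpow_mult_l, <- !zpow_of_nat.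
  replace (Z.of_nat i - Z.of_nat N)%Z with (Z.of_nat i + - Z.of_nat N)%Z by lia.
  replace (triangle (Z.of_nat i + - Z.of_nat N))
    with (Z.of_nat (triangle_nat (S N)) + Z.of_nat (triangle_nat i) + - Z.of_nat (N * i))%Z.
  2: { pose proof (triangle_spec (Z.of_nat i + - Z.of_nat N)). pose proof (triangle_nat_spec (S N)).
       pose proof (triangle_nat_spec i). rewrite Nat2Z.inj_mul. rewrite Nat2Z.inj_succ in *. nia. }
  rewrite !zpow_add, !zpow_opp by auto.
  pose proof (zpow_nz (-1) (Z.of_nat N) Hm). pose proof (zpow_nz x (Z.of_nat N) Hx).
  pose proof (zpow_nz p (Z.of_nat (N * i)) Hp).
  field. auto.
Qed.

Lemma csum_zpart_centered (g : Z -> C) N :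
  csum (fun i => g (Z.of_nat i - Z.of_nat N)%Z) (2 * N) = zpart g N.
Proof.
  induction N as [|N IH]; [reflexivity|].
  replace (2 * S N)%nat with (S (S (2 * N))) by lia.
  rewrite csum_S_l. change (csum ?f (S ?n)) with (csum f n + f (S n)).
  rewrite (csum_ext _ (fun i => g (Z.of_nat i - Z.of_nat N)%Z)) by (intros; f_equal; lia).
  rewrite IH, zpart_S. unfold zsym.
  replace (Z.of_nat 0 - Z.of_nat (S N))%Z with (- Z.of_nat (S N))%Z by lia.
  replace (Z.of_nat (S (S (2 * N))) - Z.of_nat (S N))%Z with (Z.of_nat (S N)) by lia.
  ring.
Qed.

Lemma ppart_theta_finite_centered (p x : C) N : (Cmod p < 1)%R -> p <> 0 -> x <> 0 ->
  ppart x p N * ppart (p / x) p N =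
  csum (fun i => qbinom p (2 * N) i * theta_term p x (Z.of_nat i - Z.of_nat N)) (2 * N).
Proof.
  intros Hp Hp0 Hx. pose proof (Cpow_nz p N Hp0).
  assert (Hx' : - x <> 0) by (intro E; apply Hx; replace x with (- - x) by ring; rewrite E; ring).
  pose proof (ppart_rothe p Hp (x / p ^ N) (2 * N)) as R.
  replace (2 * N)%nat with (N + N)%nat in R at 1 by lia.
  rewrite ppart_add, ppart_reflect in R by auto.
  replace (x / p ^ N * p ^ N) with x in R by (field; auto).
  rewrite (csum_ext _ (fun i => p ^ triangle_nat (S N) / (- x) ^ N
      * (qbinom p (2 * N) i * p ^ triangle_nat i * (- (x / p ^ N)) ^ i))).
  2: { intros i _. rewrite theta_term_sub_nat by auto.
       replace (- (x / p ^ N)) with (- x / p ^ N) by (field; auto). ring. }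
  rewrite csum_scal, <- R.
  pose proof (Cpow_nz p (triangle_nat (S N)) Hp0). pose proof (Cpow_nz (- x) N Hx').
  field. split; auto.
Qed.

Definition central_qbinom (p : C) N i : C :=
  ppart p p (2 * N) / (ppart p p (N + i) * ppart p p (N - i)).

Lemma ppart_theta_finite (p x : C) N : (Cmod p < 1)%R -> p <> 0 -> x <> 0 ->
  ppart x p N * ppart (p / x) p N = csum (fun i => zsym (theta_term p x) i * central_qbinom p N i) N.
Proof.
  intros Hp Hp0 Hx. rewrite ppart_theta_finite_centered by auto.
  transitivity (zpart (fun j => qbinom p (2 * N) (Z.to_nat (j + Z.of_nat N)) * theta_term p x j) N).
  { rewrite <- csum_zpart_centered. apply csum_ext. intros i _. do 3 f_equal. lia. }
  apply csum_ext. intros [|k] Hk; unfold zsym, qbinom, central_qbinom.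
  - rewrite Z.add_0_l, Nat2Z.id, Nat.add_0_r, Nat.sub_0_r.
    replace (N <=? 2 * N)%nat with true by (symmetry; apply Nat.leb_le; lia).
    replace (2 * N - N)%nat with N by lia. ring.
  - replace (Z.to_nat (Z.of_nat (S k) + Z.of_nat N)) with (N + S k)%nat by lia.
    replace (Z.to_nat (- Z.of_nat (S k) + Z.of_nat N)) with (N - S k)%nat by lia.
    replace (N + S k <=? 2 * N)%nat with true by (symmetry; apply Nat.leb_le; lia).
    replace (N - S k <=? 2 * N)%nat with true by (symmetry; apply Nat.leb_le; lia).
    replace (2 * N - (N + S k))%nat with (N - S k)%nat by lia.
    replace (2 * N - (N - S k))%nat with (N + S k)%nat by lia.
    pose proof (ppart_self_nz p (N + S k) Hp). pose proof (ppart_self_nz p (N - S k) Hp).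
    field. split; auto.
Qed.

Lemma central_qbinom_cv (p : C) i : (Cmod p < 1)%R ->
  cv (fun N => central_qbinom p N i) (/ qinf p p).
Proof.
  intros Hp. pose proof (qinf_self_nz p Hp) as Hq.
  set (c0 := exp (- (Cmod p / ((1 - Cmod p) * (1 - Cmod p))))).
  assert (Hlow : forall n, (c0 <= Cmod (ppart p p n))%R) by (intros; apply ppart_self_lower_bound; auto).
  pose proof (ppart_cv_qinf p p Hp) as Hcv.
  replace (/ qinf p p) with (qinf p p * (/ qinf p p * / qinf p p)) by (field; auto).
  apply (cv_ext (fun N => ppart p p (2 * N) * (/ ppart p p (N + i) * / ppart p p (N - i)))).
  { intros N. unfold central_qbinom. field. split; apply ppart_self_nz; auto. }
  apply cv_mult; [|apply cv_mult].
  - apply (cv_comp (ppart p p)); auto. intros N; exists N; intros; lia.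
  - apply (cv_inv _ _ c0); auto; [apply cv_shift; auto|apply exp_pos].
  - apply (cv_inv _ _ c0); auto; [|apply exp_pos].
    apply (cv_comp (ppart p p)); auto. intros N; exists (N + i)%nat; intros; lia.
Qed.

Lemma central_qbinom_bounded (p : C) : (Cmod p < 1)%R ->
  exists M, forall N i, (i <= N)%nat -> (Cmod (central_qbinom p N i) <= M)%R.
Proof.
  intros Hp.
  set (c0 := exp (- (Cmod p / ((1 - Cmod p) * (1 - Cmod p))))).
  set (U := exp (Cmod p / (1 - Cmod p))).
  assert (Hc0 : (0 < c0)%R) by apply exp_pos.
  assert (Hlow : forall n, (c0 <= Cmod (ppart p p n))%R) by (intros; apply ppart_self_lower_bound; auto).
  exists (U / (c0 * c0))%R. intros N i Hi. unfold central_qbinom.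
  pose proof (ppart_self_nz p (N + i) Hp). pose proof (ppart_self_nz p (N - i) Hp).
  rewrite Cmod_div, Cmod_mult by (apply Cmult_neq_0; auto).
  unfold Rdiv. apply Rmult_le_compat; try apply Cmod_ge_0.
  - left. apply Rinv_0_lt_compat. apply Rmult_lt_0_compat; apply Cmod_gt_0; auto.
  - apply ppart_upper_bound; auto.
  - apply Rinv_le_contravar; [nra|]. apply Rmult_le_compat; try lra; auto.
Qed.

Lemma jacobi_triple_product (p x : C) : (Cmod p < 1)%R -> p <> 0 -> x <> 0 ->
  theta x p = / qinf p p * theta_series p x.
Proof.
  intros Hp Hp0 Hx.
  apply (cv_unique (fun N => ppart x p N * ppart (p / x) p N)).
  - apply cv_mult; apply ppart_cv_qinf; auto.
  - apply (cv_ext (fun N => csum (fun i => zsym (theta_term p x) i * central_qbinom p N i) N));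
      [intros; rewrite ppart_theta_finite; auto|].
    destruct (theta_term_dominated p x (/ 2) Hp Hx ltac:(lra)) as [c Dc].
    destruct (central_qbinom_bounded p Hp) as [M HM].
    apply (tannery _ _ (2 * c) (/ 2) M); auto.
    + lra.
    + intros [|i].
      * pose proof (geom_dominated_nonneg _ _ _ Dc). specialize (Dc 0%Z). simpl in *. lra.
      * apply geom_dominated_zsym; auto.
    + intros; apply central_qbinom_cv; auto.
    + apply (zsum_cv _ c (/ 2)); [lra|auto].
Qed.

(** * Products of theta series and the addition formula *)

Section ThetaSeriesProduct.

Variables (p A B : C).
Hypotheses (Hp0 : p <> 0) (Hp : (Cmod p < 1)%R) (HA : A <> 0) (HB : B <> 0).

Lemma theta_term_mul_even k e :
  theta_term p A (k + e) * theta_term p B (k + e - 2 * e)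
  = gauss_term p 0 (A / B) e * gauss_term p (-1) (A * B) k.
Proof.
  unfold theta_term, gauss_term.
  replace (k + e)%Z with (- (k + - e) + 2 * k)%Z at 1 by lia.
  replace (triangle (k + e)) with ((e * e + 0 * e + (k * k + -1 * k)) + - triangle (k + - e))%Z
    by (pose proof (triangle_spec (k + e)); pose proof (triangle_spec (k + - e)); nia).
  replace (k + e - 2 * e)%Z with (k + - e)%Z by lia.
  rewrite zpow_div_l, zpow_mult_l, !zpow_add, !zpow_opp, zpow_m1_double, !zpow_add, !zpow_opp by auto using m1_nz.
  field. repeat split; apply zpow_nz; auto using m1_nz.
Qed.

Lemma theta_term_mul_odd k e :
  theta_term p A (k + (e + 1)) * theta_term p B (k + (e + 1) - (2 * e + 1))
  = - A * gauss_term p 1 (A / B) e * gauss_term p 0 (A * B) k.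
Proof.
  unfold theta_term, gauss_term.
  replace (k + (e + 1))%Z with (- (k + - e) + 2 * k + 1)%Z at 1 by lia.
  replace (triangle (k + (e + 1))) with ((e * e + 1 * e + (k * k + 0 * k)) + - triangle (k + - e))%Z
    by (pose proof (triangle_spec (k + (e + 1))); pose proof (triangle_spec (k + - e)); nia).
  replace (k + (e + 1) - (2 * e + 1))%Z with (k + - e)%Z by lia.
  rewrite zpow_div_l, zpow_mult_l, !zpow_add, !zpow_opp, zpow_m1_double, !zpow_add, !zpow_opp, !zpow_1
    by auto using m1_nz.
  field. repeat split; apply zpow_nz; auto using m1_nz.
Qed.

Let W m d := theta_term p A m * theta_term p B (m - d).

Lemma theta_series_mul_double :
  theta_series p A * theta_series p B = zsum (fun m => zsum (W m)).
Proof.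
  destruct (theta_term_dominated p A (/ 2) Hp HA ltac:(lra)) as [cA DA].
  destruct (theta_term_dominated p B (/ 2) Hp HB ltac:(lra)) as [cB DB].
  rewrite Cmult_comm. unfold theta_series at 2.
  rewrite <- (zsum_scal (theta_series p B) _ cA (/ 2)) by (auto; lra).
  apply zsum_ext. intros m. unfold theta_series.
  rewrite Cmult_comm, <- (zsum_scal (theta_term p A m) _ cB (/ 2)) by (auto; lra).
  symmetry. apply (zsum_sub_opp (fun n => theta_term p A m * theta_term p B n)
    (Cmod (theta_term p A m) * cB) (/ 2)); [lra|].
  apply geom_dominated_scal; auto.
Qed.

Lemma theta_double_term_bound : exists c,
  forall m d, (Cmod (W m d) <= c * (/ 2) ^ Z.abs_nat m * (/ 2) ^ Z.abs_nat d)%R.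
Proof.
  set (r := (/ 2)%R).
  destruct (theta_term_dominated p A (r * r) Hp HA ltac:(unfold r; lra)) as [cA DA].
  destruct (theta_term_dominated p B (r * r) Hp HB ltac:(unfold r; lra)) as [cB DB].
  pose proof (geom_dominated_nonneg _ _ _ DA). pose proof (geom_dominated_nonneg _ _ _ DB).
  exists (cA * cB)%R. intros m d. unfold W. rewrite Cmod_mult.
  eapply Rle_trans; [apply Rmult_le_compat; try apply Cmod_ge_0; [apply DA|apply DB]|].
  rewrite !Rpow_mult_distr, <- !pow_add.
  replace (cA * r ^ (Z.abs_nat m + Z.abs_nat m) * (cB * r ^ (Z.abs_nat (m - d) + Z.abs_nat (m - d))))%R
    with (cA * cB * r ^ (Z.abs_nat m + Z.abs_nat m + (Z.abs_nat (m - d) + Z.abs_nat (m - d))))%R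
    by (rewrite !pow_add; ring).
  rewrite (Rmult_assoc (cA * cB)), <- pow_add. apply Rmult_le_compat_l; [nra|].
  apply pow_le_antimono; [unfold r; lra|lia].
Qed.

Lemma gauss_series_m1 (X : C) : X <> 0 -> gauss_series p (-1) X = X * gauss_series p 1 X.
Proof.
  intros HX.
  destruct (gauss_term_dominated p (-1) X (/ 2) ltac:(lia) Hp HX ltac:(lra)) as [c D].
  destruct (gauss_term_dominated p 1 X (/ 2) ltac:(lia) Hp HX ltac:(lra)) as [c1 D1].
  unfold gauss_series. rewrite <- (zsum_shift 1 _ _ (/ 2) ltac:(lra) D).
  rewrite <- (zsum_scal X _ c1 (/ 2)) by (auto; lra).
  apply zsum_ext. intros k. unfold gauss_term.
  replace ((k + 1) * (k + 1) + -1 * (k + 1))%Z with (k * k + 1 * k)%Z by ring.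
  rewrite zpow_succ by auto. ring.
Qed.

Lemma theta_series_mul :
  theta_series p A * theta_series p B =
  A * B * gauss_series p 1 (A * B) * gauss_series p 0 (A / B)
  - A * gauss_series p 0 (A * B) * gauss_series p 1 (A / B).
Proof.
  set (r := (/ 2)%R). assert (Hr : (0 < r < 1)%R) by (unfold r; lra).
  assert (HX : A * B <> 0) by (apply Cmult_neq_0; auto).
  assert (HY : A / B <> 0) by (unfold Cdiv; apply Cmult_neq_0; auto; apply Cinv_nz; auto).
  destruct theta_double_term_bound as [c Hc].
  assert (DW : forall d, geom_dominated (fun m => W m d) (c * r ^ Z.abs_nat d) r).
  { intros d m. eapply Rle_trans; [apply Hc|]. right; unfold r; ring. }
  assert (DF : geom_dominated (fun d => zsum (fun m => W m d)) (c * (1 + 2 * r / (1 - r))) r).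
  { intros d. eapply Rle_trans; [apply (zsum_bound _ (c * r ^ Z.abs_nat d) r); [lra|apply DW]|].
    right; ring. }
  destruct (gauss_term_dominated p (-1) (A * B) r ltac:(lia) Hp HX ltac:(lra)) as [cE DE].
  destruct (gauss_term_dominated p 0 (A * B) r ltac:(lia) Hp HX ltac:(lra)) as [c0X D0X].
  destruct (gauss_term_dominated p 0 (A / B) r ltac:(lia) Hp HY ltac:(lra)) as [c0Y D0Y].
  destruct (gauss_term_dominated p 1 (A / B) r ltac:(lia) Hp HY ltac:(lra)) as [c1Y D1Y].
  rewrite theta_series_mul_double, (zsum_exchange W c r Hr Hc), (zsum_even_odd _ _ _ Hr DF).
  rewrite (zsum_ext _ (fun e => gauss_series p (-1) (A * B) * gauss_term p 0 (A / B) e)).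
  2: { intros e. rewrite <- (zsum_shift e _ _ r Hr (DW (2 * e)%Z)).
       rewrite Cmult_comm. unfold gauss_series. rewrite <- (zsum_scal _ _ cE r) by (auto; lra).
       apply zsum_ext. intros k. unfold W. rewrite theta_term_mul_even. ring. }
  rewrite (zsum_ext (fun e => zsum (fun m => W m (2 * e + 1)%Z))
             (fun e => gauss_series p 0 (A * B) * (- A * gauss_term p 1 (A / B) e))).
  2: { intros e. rewrite <- (zsum_shift (e + 1) _ _ r Hr (DW (2 * e + 1)%Z)).
       rewrite Cmult_comm. unfold gauss_series. rewrite <- (zsum_scal _ _ c0X r) by (auto; lra).
       apply zsum_ext. intros k. unfold W. rewrite theta_term_mul_odd. ring. }
  rewrite (zsum_scal _ _ c0Y r), (zsum_scal _ _ (Cmod (- A) * c1Y) r), (zsum_scal _ _ c1Y r),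
    gauss_series_m1 by (auto using geom_dominated_scal; lra).
  unfold gauss_series. ring.
Qed.

End ThetaSeriesProduct.

Lemma theta_mul_expansion (p : C) : (Cmod p < 1)%R ->
  exists (K : C) (F0 F1 : C -> C), K <> 0 /\
  forall A B X Y : C, A <> 0 -> B <> 0 -> A * B = X -> A / B = Y ->
  K * K * (theta A p * theta B p) = X * F1 X * F0 Y - A * F0 X * F1 Y.
Proof.
  intros Hp. destruct (Ceq_dec p 0) as [->|Hp0].
  - exists 1, (fun _ => 1), (fun z => 1 + / z). split; [apply C1_nz|].
    intros A B X Y HA HB <- <-. rewrite !theta_0_r by auto. field. auto.
  - exists (qinf p p), (gauss_series p 0), (gauss_series p 1). split; [apply qinf_self_nz; auto|].
    intros A B X Y HA HB <- <-. rewrite <- theta_series_mul, !jacobi_triple_product by auto.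
    pose proof (qinf_self_nz p Hp). field. auto.
Qed.

Lemma theta_addition (p a b c R Q : C) : (Cmod p < 1)%R ->
  a <> 0 -> b <> 0 -> c <> 0 -> R <> 0 -> Q <> 0 ->
  theta (a * R) p * theta (b * R) p * theta (c * Q) p * theta (a * Q / (b * c)) p
  - theta Q p * theta (a * Q / b) p * theta (a * R / c) p * theta (b * c * R) p
  = Q * (theta (a * R * Q) p * theta (b * R / Q) p * theta c p * theta (a / (b * c)) p).
Proof.
  intros Hp Ha Hb Hc HR HQ.
  destruct (theta_mul_expansion p Hp) as [K [F0 [F1 [HK HE]]]].
  apply (Cmult_eq_reg_l (K * K * (K * K))); [repeat apply Cmult_neq_0; auto|].
  assert (nz : forall x y : C, x <> 0 -> y <> 0 -> x * y <> 0) by (intros; apply Cmult_neq_0; auto).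
  assert (nzd : forall x y : C, x <> 0 -> y <> 0 -> x / y <> 0)
    by (intros; unfold Cdiv; apply Cmult_neq_0; auto; apply Cinv_nz; auto).
  set (X1 := a * b * (R * R)). set (X2 := a * (Q * Q) / b).
  set (Y1 := a / b). set (Y2 := b * c * c / a).
  pose proof (HE (a * R) (b * R) X1 Y1 ltac:(auto) ltac:(auto)
    ltac:(unfold X1; ring) ltac:(unfold Y1; field; auto)) as E1.
  pose proof (HE (c * Q) (a * Q / (b * c)) X2 Y2 ltac:(auto) ltac:(auto 6)
    ltac:(unfold X2; field; auto) ltac:(unfold Y2; field; auto)) as E2.
  pose proof (HE (a * Q / b) Q X2 Y1 ltac:(auto) ltac:(auto)
    ltac:(unfold X2; field; auto) ltac:(unfold Y1; field; auto)) as E3.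
  pose proof (HE (b * c * R) (a * R / c) X1 Y2 ltac:(auto) ltac:(auto)
    ltac:(unfold X1; field; auto) ltac:(unfold Y2; field; auto)) as E4.
  pose proof (HE (a * R * Q) (b * R / Q) X1 X2 ltac:(auto) ltac:(auto)
    ltac:(unfold X1; field; auto) ltac:(unfold X2; field; auto)) as E5.
  pose proof (HE c (a / (b * c)) Y1 Y2 ltac:(auto) ltac:(auto)
    ltac:(unfold Y1; field; auto) ltac:(unfold Y2; field; auto)) as E6.
  transitivity ((K * K * (theta (a * R) p * theta (b * R) p))
                * (K * K * (theta (c * Q) p * theta (a * Q / (b * c)) p))
              - (K * K * (theta (a * Q / b) p * theta Q p))
                * (K * K * (theta (b * c * R) p * theta (a * R / c) p))); [ring|].
  transitivity (Q * (K * K * (theta (a * R * Q) p * theta (b * R / Q) p))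
                 * (K * K * (theta c p * theta (a / (b * c)) p))); [|ring].
  rewrite E1, E2, E3, E4, E5, E6. unfold X1, X2, Y1, Y2. field. auto.
Qed.

(** * The bibasic summation *)

Lemma ell_S y q p k : ell y q p (S k) = ell y q p k * theta (y * cpow q k) p.
Proof. reflexivity. Qed.

Lemma ell_S_l y q p k : ell y q p (S k) = theta y p * ell (y * q) q p k.
Proof.
  induction k as [|k IH]; [simpl; replace (y * 1) with y by ring; ring|].
  rewrite ell_S, IH, ell_S.
  replace (y * cpow q (S k)) with (y * q * cpow q k) by (simpl; ring). ring.
Qed.

Lemma ell_S_shifted y z q p k : z = y * q ->
  ell z q p (S k) = ell z q p k * theta (y * cpow q (S k)) p.
Proof. intros ->. rewrite ell_S. do 2 f_equal. simpl. ring. Qed.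

Lemma ell_nz_le y q p n k : ell y q p n <> 0 -> (k <= n)%nat -> ell y q p k <> 0.
Proof.
  intros H Hk. induction n as [|n IH]; [replace k with O by lia; apply C1_nz|].
  destruct (Nat.eq_dec k (S n)) as [->|]; auto.
  apply IH; [|lia]. rewrite ell_S in H. apply Cmult_nz_l in H. auto.
Qed.

Definition bibasic_term (a b c q r p : C) (k : nat) : C :=
  theta (a * cpow r k * cpow q k) p * theta (b * cpow r k / cpow q k) p / (theta a p * theta b p)
  * (ell a r p k * ell b r p k * ell c q p k * ell (a / (b * c)) q p k)
  / (ell q q p k * ell (a * q / b) q p k * ell (a * r / c) r p k * ell (b * c * r) r p k)
  * cpow q k.

Definition bibasic_closed_form (a b c q r p : C) (n : nat) : C :=
  (ell (a * r) r p n * ell (b * r) r p n * ell (c * q) q p n * ell (a * q / (b * c)) q p n)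
  / (ell q q p n * ell (a * q / b) q p n * ell (a * r / c) r p n * ell (b * c * r) r p n).

Lemma bibasic_step_algebra (N1 N2 N3 N4 M1 M2 M3 M4 t1 t2 t3 t4 t5 t6 t7 t8 u1 u2 ta tb tc td Q : C) :
  M1 <> 0 -> M2 <> 0 -> M3 <> 0 -> M4 <> 0 -> t5 <> 0 -> t6 <> 0 -> t7 <> 0 -> t8 <> 0 ->
  ta <> 0 -> tb <> 0 ->
  t1 * t2 * t3 * t4 - t5 * t6 * t7 * t8 = Q * (u1 * u2 * tc * td) ->
  N1 * N2 * N3 * N4 / (M1 * M2 * M3 * M4)
  + u1 * u2 / (ta * tb) * (ta * N1 * (tb * N2) * (tc * N3) * (td * N4))
    / (M1 * t5 * (M2 * t6) * (M3 * t7) * (M4 * t8)) * Q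
  = N1 * t1 * (N2 * t2) * (N3 * t3) * (N4 * t4) / (M1 * t5 * (M2 * t6) * (M3 * t7) * (M4 * t8)).
Proof.
  intros H1 H2 H3 H4 H5 H6 H7 H8 Ha Hb AF.
  transitivity (N1 * N2 * N3 * N4 / (M1 * M2 * M3 * M4) + (Q * (u1 * u2 * tc * td))
    * (N1 * N2 * N3 * N4) / (M1 * M2 * M3 * M4 * (t5 * t6 * t7 * t8))).
  { field. repeat split; auto. }
  rewrite <- AF. field. repeat split; auto.
Qed.

Section BibasicSummation.

Variables (p a b c q r : C).
Hypotheses (Hp : (Cmod p < 1)%R) (Ha : a <> 0) (Hb : b <> 0) (Hc : c <> 0) (Hq : q <> 0) (Hr : r <> 0)
  (Hab : theta a p * theta b p <> 0).

(* Each step of the telescoping sum is one instance of [theta_addition]. *)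
Lemma bibasic_closed_form_S m :
  ell q q p (S m) <> 0 -> ell (a * q / b) q p (S m) <> 0 ->
  ell (a * r / c) r p (S m) <> 0 -> ell (b * c * r) r p (S m) <> 0 ->
  bibasic_closed_form a b c q r p (S m)
  = bibasic_closed_form a b c q r p m + bibasic_term a b c q r p (S m).
Proof.
  intros E1 E2 E3 E4.
  pose proof (theta_addition p a b c (cpow r (S m)) (cpow q (S m)) Hp Ha Hb Hc
    (cpow_nz r _ Hr) (cpow_nz q _ Hq)) as AF.
  unfold bibasic_closed_form, bibasic_term.
  rewrite (ell_S_l a), (ell_S_l b), (ell_S_l c), (ell_S_l (a / (b * c))).
  replace (a / (b * c) * q) with (a * q / (b * c)) by (field; auto).
  rewrite (ell_S_shifted a (a * r)), (ell_S_shifted b (b * r)), (ell_S_shifted c (c * q)),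
    (ell_S_shifted (a / (b * c)) (a * q / (b * c))), (ell_S_shifted 1 q),
    (ell_S_shifted (a / b) (a * q / b)), (ell_S_shifted (a / c) (a * r / c)),
    (ell_S_shifted (b * c) (b * c * r)) in * by (field; auto).
  replace (1 * cpow q (S m)) with (cpow q (S m)) in * by ring.
  replace (a / b * cpow q (S m)) with (a * cpow q (S m) / b) in * by (field; auto).
  replace (a / c * cpow r (S m)) with (a * cpow r (S m) / c) in * by (field; auto).
  replace (a / (b * c) * cpow q (S m)) with (a * cpow q (S m) / (b * c)) by (field; auto).
  symmetry. apply bibasic_step_algebra; auto;
    solve [eapply Cmult_nz_l; eassumption | eapply Cmult_nz_r; eassumption].
Qed.

Lemma bibasic_summation n :
  ell q q p n <> 0 -> ell (a * q / b) q p n <> 0 -> ell (a * r / c) r p n <> 0 ->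
  ell (b * c * r) r p n <> 0 ->
  csum (bibasic_term a b c q r p) n = bibasic_closed_form a b c q r p n.
Proof.
  intros D1 D2 D3 D4.
  assert (Ha' : theta a p <> 0) by (eapply Cmult_nz_l; eauto).
  assert (Hb' : theta b p <> 0) by (eapply Cmult_nz_r; eauto).
  induction n as [|m IH].
  - unfold bibasic_term, bibasic_closed_form. simpl.
    rewrite !Cmult_1_r. replace (b / 1) with b by field. field. auto.
  - simpl csum. rewrite IH, bibasic_closed_form_S; auto; eapply ell_nz_le; eauto.
Qed.

End BibasicSummation.

(** * Reversal *)

Fixpoint cprod (f : nat -> C) (k : nat) : C :=
  match k with O => 1 | S j => cprod f j * f j end.

Lemma cprod_nz (f : nat -> C) k : (forall i, f i <> 0) -> cprod f k <> 0.
Proof. intros H. induction k; simpl; [apply C1_nz|apply Cmult_neq_0; auto]. Qed.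

Lemma cprod_mult (f g : nat -> C) k : cprod f k * cprod g k = cprod (fun i => f i * g i) k.
Proof. induction k as [|k IH]; simpl; [ring|]. rewrite <- IH. ring. Qed.

Lemma theta_flip (z p : C) : (Cmod p < 1)%R -> z <> 0 -> theta z p = - z * theta (/ z) p.
Proof. intros Hp Hz. rewrite theta_inv by auto. field. auto. Qed.

Lemma ell_split_top (y q p : C) n k : (k <= n)%nat ->
  ell y q p n = ell y q p (n - k) * cprod (fun i => theta (y * cpow q (n - 1 - i)) p) k.
Proof.
  induction k as [|k IH]; intros Hk; [rewrite Nat.sub_0_r; simpl; ring|].
  rewrite IH by lia. simpl cprod.
  replace (n - k)%nat with (S (n - S k)) by lia. rewrite ell_S.
  replace (n - 1 - k)%nat with (n - S k)%nat by lia. ring.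
Qed.

(* The factor [(-y q^(n-1))^k q^(-k(k-1)/2)] of the classical reversal, kept as a product:
   it only enters through products of two such factors, which depend on [y1 y2] alone. *)
Definition reversal_weight (y q : C) n k : C := cprod (fun i => - (y * cpow q (n - 1 - i))) k.

Lemma reversal_weight_nz (y q : C) n k : y <> 0 -> q <> 0 -> reversal_weight y q n k <> 0.
Proof.
  intros Hy Hq. apply cprod_nz. intros i E. apply (Cmult_neq_0 y (cpow q (n - 1 - i))); auto.
  - apply cpow_nz; auto.
  - replace (y * cpow q (n - 1 - i)) with (- - (y * cpow q (n - 1 - i))) by ring. rewrite E. ring.
Qed.

Lemma reversal_weight_pair (y1 y2 z1 z2 q : C) n k : y1 * y2 = z1 * z2 ->
  reversal_weight y1 q n k * reversal_weight y2 q n k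
  = reversal_weight z1 q n k * reversal_weight z2 q n k.
Proof.
  intros H. unfold reversal_weight. rewrite !cprod_mult.
  induction k as [|k IH]; simpl; [reflexivity|]. rewrite IH.
  transitivity (cprod (fun i => - (z1 * cpow q (n - 1 - i)) * - (z2 * cpow q (n - 1 - i))) k
    * ((y1 * y2) * (cpow q (n - 1 - k) * cpow q (n - 1 - k)))); [ring|].
  rewrite H. ring.
Qed.

Lemma ell_reversal (y q p x : C) n k : (Cmod p < 1)%R -> y <> 0 -> q <> 0 -> (k <= n)%nat ->
  x = / (y * cpow q (n - 1)) ->
  ell y q p n = ell y q p (n - k) * reversal_weight y q n k * ell x q p k.
Proof.
  intros Hp Hy Hq Hk ->. rewrite (ell_split_top y q p n k Hk), <- Cmult_assoc. f_equal.
  unfold reversal_weight. induction k as [|k IH]; simpl; [ring|].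
  rewrite IH by lia.
  rewrite (theta_flip (y * cpow q (n - 1 - k)) p Hp) by (apply Cmult_neq_0; auto; apply cpow_nz; auto).
  replace (/ (y * cpow q (n - 1 - k))) with (/ (y * cpow q (n - 1)) * cpow q k); [ring|].
  replace (n - 1)%nat with ((n - 1 - k) + k)%nat at 1 by lia. rewrite cpow_add.
  pose proof (cpow_nz q (n - 1 - k) Hq). pose proof (cpow_nz q k Hq). field. auto.
Qed.

Definition bibasic_reversal_factor (a b c q r p : C) (n k : nat) : C :=
  (ell (c * / cpow r n / a) r p k * ell (/ cpow r n / (b * c)) r p k
   * ell (/ cpow q n) q p k * ell (b * / cpow q n / a) q p k)
  / (ell (/ cpow q n / c) q p k * ell (b * c * / cpow q n / a) q p k
     * ell (/ cpow r n / a) r p k * ell (/ cpow r n / b) r p k).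

Lemma reversal_algebra (E1 E2 E3 E4 P1 P2 P3 P4 X1 X2 X3 X4 F1 F2 F3 F4 Q1 Q2 Q3 Q4
                        Z1 Z2 Z3 Z4 : C) :
  X1 <> 0 -> X2 <> 0 -> X3 <> 0 -> X4 <> 0 -> F1 <> 0 -> F2 <> 0 -> F3 <> 0 -> F4 <> 0 ->
  Q1 <> 0 -> Q2 <> 0 -> Q3 <> 0 -> Q4 <> 0 -> Z1 <> 0 -> Z2 <> 0 -> Z3 <> 0 -> Z4 <> 0 ->
  P2 <> 0 -> P4 <> 0 -> P1 * P2 = Q3 * Q4 -> P3 * P4 = Q1 * Q2 ->
  (E1 * P1 * X1 * (E2 * P2 * X2) * (E3 * P3 * X3) * (E4 * P4 * X4))
  / (F1 * Q1 * Z1 * (F2 * Q2 * Z2) * (F3 * Q3 * Z3) * (F4 * Q4 * Z4))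
  * ((Z3 * Z4 * Z1 * Z2) / (X3 * X4 * X1 * X2)) = E1 * E2 * E3 * E4 / (F1 * F2 * F3 * F4).
Proof.
  intros HX1 HX2 HX3 HX4 HF1 HF2 HF3 HF4 HQ1 HQ2 HQ3 HQ4 HZ1 HZ2 HZ3 HZ4 HP2 HP4 HP12 HP34.
  replace P1 with (Q3 * Q4 / P2) by (rewrite <- HP12; field; auto).
  replace P3 with (Q1 * Q2 / P4) by (rewrite <- HP34; field; auto).
  field. repeat split; auto.
Qed.

Lemma bibasic_closed_form_reversal (a b c q r p : C) n k : (Cmod p < 1)%R ->
  a <> 0 -> b <> 0 -> c <> 0 -> q <> 0 -> r <> 0 -> (k <= n)%nat ->
  ell q q p n <> 0 -> ell (a * q / b) q p n <> 0 -> ell (a * r / c) r p n <> 0 ->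
  ell (b * c * r) r p n <> 0 ->
  ell (/ cpow q n / c) q p n <> 0 -> ell (b * c * / cpow q n / a) q p n <> 0 ->
  ell (/ cpow r n / a) r p n <> 0 -> ell (/ cpow r n / b) r p n <> 0 ->
  bibasic_closed_form a b c q r p n * bibasic_reversal_factor a b c q r p n k
  = bibasic_closed_form a b c q r p (n - k).
Proof.
  intros Hp Ha Hb Hc Hq Hr Hk D1 D2 D3 D4 V1 V2 V3 V4.
  destruct k as [|k].
  { unfold bibasic_reversal_factor. simpl. rewrite Nat.sub_0_r. field. }
  assert (Cq : cpow q n = cpow q (n - 1) * q) by (replace n with (S (n - 1)) at 1 by lia; reflexivity).
  assert (Cr : cpow r n = cpow r (n - 1) * r) by (replace n with (S (n - 1)) at 1 by lia; reflexivity).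
  pose proof (cpow_nz q (n - 1) Hq). pose proof (cpow_nz r (n - 1) Hr).
  assert (nz : forall x y : C, x <> 0 -> y <> 0 -> x * y <> 0) by (intros; apply Cmult_neq_0; auto).
  assert (nzd : forall x y : C, x <> 0 -> y <> 0 -> x / y <> 0)
    by (intros; unfold Cdiv; apply Cmult_neq_0; auto; apply Cinv_nz; auto).
  unfold bibasic_closed_form, bibasic_reversal_factor.
  rewrite (ell_reversal (a * r) r p (/ cpow r n / a) n (S k)),
    (ell_reversal (b * r) r p (/ cpow r n / b) n (S k)),
    (ell_reversal (c * q) q p (/ cpow q n / c) n (S k)),
    (ell_reversal (a * q / (b * c)) q p (b * c * / cpow q n / a) n (S k)),
    (ell_reversal q q p (/ cpow q n) n (S k)),
    (ell_reversal (a * q / b) q p (b * / cpow q n / a) n (S k)),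
    (ell_reversal (a * r / c) r p (c * / cpow r n / a) n (S k)),
    (ell_reversal (b * c * r) r p (/ cpow r n / (b * c)) n (S k))
    in * by (auto; rewrite ?Cr, ?Cq; field; auto).
  assert (W : forall u v w : C, u * v * w <> 0 -> u <> 0 /\ v <> 0 /\ w <> 0).
  { intros u v w Huvw. repeat split; intro E; apply Huvw; rewrite E; ring. }
  apply W in D1, D2, D3, D4.
  destruct D1 as (F1 & Q1 & Z1), D2 as (F2 & Q2 & Z2), D3 as (F3 & Q3 & Z3), D4 as (F4 & Q4 & Z4).
  apply reversal_algebra; auto; try (eapply ell_nz_le; eauto; lia); try (apply reversal_weight_nz; auto);
    apply reversal_weight_pair; field; auto.
Qed.

Lemma csum_convolution_dual (t T v V : nat -> C) n :
  (forall k, (k <= n)%nat -> csum t n * v k = csum t (n - k)) ->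
  (forall k, (k <= n)%nat -> csum T n * V k = csum T (n - k)) ->
  csum T n <> 0 ->
  csum (fun k => t k * V k) n = csum t n / csum T n * csum (fun k => T k * v k) n.
Proof.
  intros Hv HV HT. apply (Cmult_eq_reg_l (csum T n)); auto.
  transitivity (csum (fun k => csum (fun i => t k * T i) (n - k)) n).
  { rewrite <- csum_scal. apply csum_ext. intros k Hk.
    rewrite csum_scal, <- HV by auto. ring. }
  rewrite csum_triangle.
  transitivity (csum (fun i => csum t n * (T i * v i)) n).
  { apply csum_ext. intros i Hi.
    rewrite (csum_ext _ (fun k => T i * t k)), csum_scal, <- Hv by (auto; intros; ring). ring. }
  rewrite csum_scal. field. auto.
Qed.

Lemma bibasic_partial_sum_reversal (a b c q r p : C) n k : (Cmod p < 1)%R ->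
  a <> 0 -> b <> 0 -> c <> 0 -> q <> 0 -> r <> 0 -> theta a p * theta b p <> 0 -> (k <= n)%nat ->
  ell q q p n <> 0 -> ell (a * q / b) q p n <> 0 -> ell (a * r / c) r p n <> 0 ->
  ell (b * c * r) r p n <> 0 ->
  ell (/ cpow q n / c) q p n <> 0 -> ell (b * c * / cpow q n / a) q p n <> 0 ->
  ell (/ cpow r n / a) r p n <> 0 -> ell (/ cpow r n / b) r p n <> 0 ->
  csum (bibasic_term a b c q r p) n * bibasic_reversal_factor a b c q r p n k
  = csum (bibasic_term a b c q r p) (n - k).
Proof.
  intros Hp Ha Hb Hc Hq Hr Hab Hk D1 D2 D3 D4 V1 V2 V3 V4.
  assert (Hk' : (n - k <= n)%nat) by lia.
  rewrite !bibasic_summation by (auto; eapply ell_nz_le; eauto).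
  apply bibasic_closed_form_reversal; auto.
Qed.

Theorem mainTheorem14 (p P : C) (n : nat)
  (a b c q r A B C0 Q R0 : C)
  (hp : (Cmod p < 1)%R) (hP : (Cmod P < 1)%R)
  (ha : a <> 0) (hb : b <> 0) (hc : c <> 0) (hq : q <> 0) (hr : r <> 0)
  (hA : A <> 0) (hB : B <> 0) (hC : C0 <> 0) (hQ : Q <> 0) (hR : R0 <> 0)
  (* well-definedness: all denominators are nonzero *)
  (d1 : theta a p * theta b p <> 0)
  (d2 : theta A P * theta B P <> 0)
  (d3 : ell q q p n <> 0) (d4 : ell (a * q / b) q p n <> 0)
  (d5 : ell (a * r / c) r p n <> 0) (d6 : ell (b * c * r) r p n <> 0)
  (d7 : ell (/ cpow Q n / C0) Q P n <> 0)
  (d8 : ell (B * C0 * / cpow Q n / A) Q P n <> 0)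
  (d9 : ell (/ cpow R0 n / A) R0 P n <> 0)
  (d10 : ell (/ cpow R0 n / B) R0 P n <> 0)
  (d11 : ell (A * R0) R0 P n <> 0) (d12 : ell (B * R0) R0 P n <> 0)
  (d13 : ell (C0 * Q) Q P n <> 0) (d14 : ell (A * Q / (B * C0)) Q P n <> 0)
  (d15 : ell Q Q P n <> 0) (d16 : ell (A * Q / B) Q P n <> 0)
  (d17 : ell (A * R0 / C0) R0 P n <> 0) (d18 : ell (B * C0 * R0) R0 P n <> 0)
  (d19 : ell (/ cpow q n / c) q p n <> 0)
  (d20 : ell (b * c * / cpow q n / a) q p n <> 0)
  (d21 : ell (/ cpow r n / a) r p n <> 0)
  (d22 : ell (/ cpow r n / b) r p n <> 0) :
  csum (fun k =>
      theta (a * cpow r k * cpow q k) p * theta (b * cpow r k / cpow q k) p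
        / (theta a p * theta b p)
    * (ell a r p k * ell b r p k * ell c q p k * ell (a / (b * c)) q p k)
        / (ell q q p k * ell (a * q / b) q p k
           * ell (a * r / c) r p k * ell (b * c * r) r p k)
    * (ell (C0 * / cpow R0 n / A) R0 P k * ell (/ cpow R0 n / (B * C0)) R0 P k
       * ell (/ cpow Q n) Q P k * ell (B * / cpow Q n / A) Q P k)
        / (ell (/ cpow Q n / C0) Q P k * ell (B * C0 * / cpow Q n / A) Q P k
           * ell (/ cpow R0 n / A) R0 P k * ell (/ cpow R0 n / B) R0 P k)
    * cpow q k) n
  =
  (ell (a * r) r p n * ell (b * r) r p n * ell (c * q) q p n
     * ell (a * q / (b * c)) q p n * ell Q Q P n * ell (A * Q / B) Q P n
     * ell (A * R0 / C0) R0 P n * ell (B * C0 * R0) R0 P n)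
  / (ell q q p n * ell (a * q / b) q p n * ell (a * r / c) r p n
     * ell (b * c * r) r p n * ell (A * R0) R0 P n * ell (B * R0) R0 P n
     * ell (C0 * Q) Q P n * ell (A * Q / (B * C0)) Q P n)
  * csum (fun k =>
      theta (A * cpow R0 k * cpow Q k) P * theta (B * cpow R0 k / cpow Q k) P
        / (theta A P * theta B P)
    * (ell A R0 P k * ell B R0 P k * ell C0 Q P k * ell (A / (B * C0)) Q P k)
        / (ell Q Q P k * ell (A * Q / B) Q P k
           * ell (A * R0 / C0) R0 P k * ell (B * C0 * R0) R0 P k)
    * (ell (c * / cpow r n / a) r p k * ell (/ cpow r n / (b * c)) r p k
       * ell (/ cpow q n) q p k * ell (b * / cpow q n / a) q p k)
        / (ell (/ cpow q n / c) q p k * ell (b * c * / cpow q n / a) q p k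
           * ell (/ cpow r n / a) r p k * ell (/ cpow r n / b) r p k)
    * cpow Q k) n.
Proof.
  rewrite (csum_ext _ (fun k => bibasic_term a b c q r p k * bibasic_reversal_factor A B C0 Q R0 P n k))
    by (intros; unfold bibasic_term, bibasic_reversal_factor, Cdiv; ring).
  rewrite (csum_ext (fun k => _ * cpow Q k)
             (fun k => bibasic_term A B C0 Q R0 P k * bibasic_reversal_factor a b c q r p n k))
    by (intros; unfold bibasic_term, bibasic_reversal_factor, Cdiv; ring).
  replace (_ / _) with (csum (bibasic_term a b c q r p) n / csum (bibasic_term A B C0 Q R0 P) n).
  2: { rewrite !bibasic_summation by auto. unfold bibasic_closed_form.
       field. repeat split; auto. }
  apply csum_convolution_dual; intros; try apply bibasic_partial_sum_reversal; auto.
  rewrite bibasic_summation by auto. unfold bibasic_closed_form.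
  unfold Cdiv. repeat apply Cmult_neq_0; auto. apply Cinv_nz. repeat apply Cmult_neq_0; auto.
Qed.
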